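(* The algorithm $\mathcal{U}$ described in the context is linearizable with respect to $\mathcal{T}$: every history $H$ of $\mathcal{U}$ has a completion $H'$ and a linearization of $H'$ that conforms to $\mathcal{T}$.
   Context: Model: an asynchronous shared-memory system with possibly infinitely many processes, any of which may crash, communicating via atomic shared objects. A fetch-and-increment (F\&I) object stores an integer; F\&I$(C)$ atomically returns the current value and increments it. A generalized-compare-and-swap (GCAS) object $O$ stores a value and supports Read$(O)$ and GCAS$(c, O, v_1, v_2)$, which atomically does: if $c(\text{current value of } O, v_1)$ holds then set $O := v_2$ and return true, else return false. Tuples are compared componentwise for $=$; GCAS$(>, A, (t,-,-), v)$ succeeds iff the time field of $A$ is strictly greater than $t$. Implemented type $\mathcal{T} = (OP, RES, Q, \delta)$ with $\delta \subseteq Q\times OP\times Q\times RES$ and initial state $s_0$; a procedure $apply_{\mathcal{T}}(o,s)$ returns some $(s',r)$ with $(s,o,s',r)\in\delta$. $NULL$ is a value different from every response of $\mathcal{T}$, and $NOOP$ is a name different from every operation of $\mathcal{T}$. Algorithm $\mathcal{U}$: each process $p$ owns a GCAS object $H_p$ with fields $(time, response)$. Shared objects: F\&I object $C$, initially $1$; GCAS object $A$ with fields $(time, op, ptr)$, initially $(0, NOOP, h(NOOP))$, where $h(NOOP)$ is a pointer to an immutable location containing $(0,\perp)$; GCAS object $S$ with fields $(time, state, response, ptr)$, initially $(0, s_0, \perp, h(NOOP))$. Process $p$ performs operation $o$ by calling DoOp$(o)$: (1) DoOp$(o)$ invoked; (2) $t := $ F\&I$(C)$; (3) $H_p := (t,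 NULL)$; (4) while $H_p = (t, NULL)$ do: (5) $(t^*, s^*, r^*, roptr^* ) := S$; (6) GCAS$(=, *roptr^*, (t^*, NULL), (t^*, r^* ))$; (7) GCAS$(>, A, (t,-,-), (t, o, \&H_p))$; (8) $(t', o', roptr') := A$; (9) $(\hat t, \hat r) := *roptr'$; (10) if $(\hat t,\hat r) = (t', NULL)$ then (11) $(s', r') := apply_{\mathcal{T}}(o', s^* )$; (12) GCAS$(=, S, (t^*,s^*,r^*,roptr^* ), (t', s', r', roptr'))$; (13) else GCAS$(=, A, (t', o', roptr'), (t, o, \&H_p))$; end while; (14) return $H_p.response$. Lines 1 and 14 are the invocation and response steps. Linearizability: a history is the subsequence of invocation/response steps of an execution; an operation execution is complete if its response appears, pending otherwise. A completion $H'$ of $H$ removes some pending invocations and adds responses to all others so every operation is complete. A linearization of a complete history assigns each operation a distinct point within its invocation–response interval; it conforms to $\mathcal{T}$ if the responses are those obtained by applying the operations sequentially in that order starting from $s_0$ according to $\delta$. *)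

From Stdlib Require Import List Arith QArith.
Local Open Scope nat_scope.
Import ListNotations.

Set Implicit Arguments.

Section Model.

(* The implemented type T = (OP, RES, St, delta) with initial state s0. *)
Context (OP RES St : Type) (delta : St -> OP -> St -> RES -> Prop) (s0 : St).

(* Processes are identified by natural numbers (possibly infinitely many). *)
Definition proc := nat.

Inductive rval : Type := RNull | RBot | RVal (r : RES).

(* A pointer: either &H_p for a process p, or h(NOOP) (= None), the pointer to
   an immutable location containing (0, ⊥). *)
Definition ptr := option proc.

(* Operation field of A: None stands for NOOP. *)
Definition aval := (nat * option OP * ptr)%type.           (* (time, op, ptr) *)
Definition sval := (nat * St * rval * ptr)%type.           (* (time, state, response, ptr) *)
Definition hval := (nat * rval)%type.                      (* (time, response) *)

(* Program counter / local variables of a process. AtN means "about to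
   execute line N" with the current values of the local variables. *)
Inductive pcst : Type :=
| Idle
| At2 (o : OP)
| At3 (o : OP) (t : nat)
| At4 (o : OP) (t : nat)
| At5 (o : OP) (t : nat)
| At6 (o : OP) (t : nat) (sv : sval)
| At7 (o : OP) (t : nat) (sv : sval)
| At8 (o : OP) (t : nat) (sv : sval)
| At9 (o : OP) (t : nat) (sv : sval) (av : aval)
| At12 (o : OP) (t : nat) (sv : sval) (av : aval) (s' : St) (r' : RES)
| At13 (o : OP) (t : nat) (sv : sval) (av : aval)
| At14 (o : OP) (t : nat).

Record config : Type := Config {
  cC : nat;
  cA : aval;
  cS : sval;
  cH : proc -> hval;
  cpc : proc -> pcst
}.

Definition init_config : config :=
  Config 1 (0, None, None) (0, s0, RBot, None) (fun _ => (0, RBot)) (fun _ => Idle).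

Definition upd {X : Type} (f : proc -> X) (p : proc) (x : X) : proc -> X :=
  fun q => if Nat.eqb q p then x else f q.

Definition deref (H : proc -> hval) (q : ptr) : hval :=
  match q with None => (0, RBot) | Some p => H p end.

Inductive ev : Type := EInv (o : OP) | EResp (v : rval).

Definition set_pc (c : config) (p : proc) (x : pcst) : config :=
  Config (cC c) (cA c) (cS c) (cH c) (upd (cpc c) p x).

Inductive ustep : config -> proc -> option ev -> config -> Prop :=
| st1 c p o : cpc c p = Idle ->
    ustep c p (Some (EInv o)) (set_pc c p (At2 o))
(* line 2: t := F&I(C) *)
| st2 c p o : cpc c p = At2 o ->
    ustep c p None
      (Config (S (cC c)) (cA c) (cS c) (cH c) (upd (cpc c) p (At3 o (cC c))))
| st3 c p o t : cpc c p = At3 o t ->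
    ustep c p None
      (Config (cC c) (cA c) (cS c) (upd (cH c) p (t, RNull)) (upd (cpc c) p (At4 o t)))
| st4_loop c p o t : cpc c p = At4 o t -> cH c p = (t, RNull) ->
    ustep c p None (set_pc c p (At5 o t))
| st4_exit c p o t : cpc c p = At4 o t -> cH c p <> (t, RNull) ->
    ustep c p None (set_pc c p (At14 o t))
| st5 c p o t : cpc c p = At5 o t ->
    ustep c p None (set_pc c p (At6 o t (cS c)))
(* line 6: GCAS(=, deref roptr_s, (t_s, NULL), (t_s, r_s)) *)
| st6_succ c p o t ts ss rs q : cpc c p = At6 o t (ts, ss, rs, Some q) ->
    cH c q = (ts, RNull) ->
    ustep c p None
      (Config (cC c) (cA c) (cS c) (upd (cH c) q (ts, rs))
              (upd (cpc c) p (At7 o t (ts, ss, rs, Some q))))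
| st6_fail c p o t ts ss rs q : cpc c p = At6 o t (ts, ss, rs, q) ->
    deref (cH c) q <> (ts, RNull) ->
    ustep c p None (set_pc c p (At7 o t (ts, ss, rs, q)))
(* line 7: GCAS(>, A, (t,-,-), (t, o, &H_p)) *)
| st7_succ c p o t sv : cpc c p = At7 o t sv -> t < fst (fst (cA c)) ->
    ustep c p None
      (Config (cC c) (t, Some o, Some p) (cS c) (cH c) (upd (cpc c) p (At8 o t sv)))
| st7_fail c p o t sv : cpc c p = At7 o t sv -> ~ t < fst (fst (cA c)) ->
    ustep c p None (set_pc c p (At8 o t sv))
| st8 c p o t sv : cpc c p = At8 o t sv ->
    ustep c p None (set_pc c p (At9 o t sv (cA c)))
(* lines 9-11: read deref roptr_a; test; apply_T (any (s',r') allowed by delta) *)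
| st9_apply c p o t ts ss rs qs ta oa qa s' r' :
    cpc c p = At9 o t (ts, ss, rs, qs) (ta, Some oa, qa) ->
    deref (cH c) qa = (ta, RNull) ->
    delta ss oa s' r' ->
    ustep c p None (set_pc c p (At12 o t (ts, ss, rs, qs) (ta, Some oa, qa) s' r'))
| st9_else c p o t sv ta oa qa :
    cpc c p = At9 o t sv (ta, oa, qa) ->
    deref (cH c) qa <> (ta, RNull) ->
    ustep c p None (set_pc c p (At13 o t sv (ta, oa, qa)))
(* line 12: GCAS(=, S, (t_s,s_s,r_s,roptr_s), (t', s', r', roptr')) *)
| st12_succ c p o t sv ta oa qa s' r' :
    cpc c p = At12 o t sv (ta, oa, qa) s' r' -> cS c = sv ->
    ustep c p None
      (Config (cC c) (cA c) (ta, s', RVal r', qa) (cH c) (upd (cpc c) p (At4 o t)))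
| st12_fail c p o t sv av s' r' :
    cpc c p = At12 o t sv av s' r' -> cS c <> sv ->
    ustep c p None (set_pc c p (At4 o t))
(* line 13: GCAS(=, A, (t', o', roptr'), (t, o, &H_p)) *)
| st13_succ c p o t sv av : cpc c p = At13 o t sv av -> cA c = av ->
    ustep c p None
      (Config (cC c) (t, Some o, Some p) (cS c) (cH c) (upd (cpc c) p (At4 o t)))
| st13_fail c p o t sv av : cpc c p = At13 o t sv av -> cA c <> av ->
    ustep c p None (set_pc c p (At4 o t))
| st14 c p o t : cpc c p = At14 o t ->
    ustep c p (Some (EResp (snd (cH c p)))) (set_pc c p Idle).

(* Finite executions from the initial configuration, as traces of steps.
   A process that stops taking steps has crashed. *)
Inductive reach : list (proc * option ev) -> config -> Prop :=
| reach_nil : reach [] init_config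
| reach_step tr c p l c' : reach tr c -> ustep c p l c' ->
    reach (tr ++ [(p, l)]) c'.

Definition history (tr : list (proc * option ev)) : list (proc * ev) :=
  flat_map (fun x => match snd x with Some e => [(fst x, e)] | None => [] end) tr.

Definition is_inv (h : list (proc * ev)) (i : nat) : Prop :=
  exists p o, nth_error h i = Some (p, EInv o).

Definition resp_of (h : list (proc * ev)) (i j : nat) : Prop :=
  i < j /\
  exists p o v, nth_error h i = Some (p, EInv o) /\
    nth_error h j = Some (p, EResp v) /\
    forall k q e, i < k -> k < j -> nth_error h k = Some (q, e) -> q <> p.

Definition pending (h : list (proc * ev)) (i : nat) : Prop :=
  is_inv h i /\ ~ exists j, resp_of h i j.

Definition complete (h : list (proc * ev)) : Prop :=
  forall i, is_inv h i -> exists j, resp_of h i j.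

Fixpoint alternating (expect_inv : bool) (l : list ev) : Prop :=
  match l with
  | [] => True
  | EInv _ :: l' => expect_inv = true /\ alternating false l'
  | EResp _ :: l' => expect_inv = false /\ alternating true l'
  end.

Definition well_formed (h : list (proc * ev)) : Prop :=
  forall p, alternating true (map snd (filter (fun x => Nat.eqb (fst x) p) h)).

Definition is_completion (h h' : list (proc * ev)) : Prop :=
  exists (keep : nat -> bool) (E : list (proc * RES)),
    (forall i, i < length h -> keep i = false -> pending h i) /\
    h' = map snd (filter (fun ix => keep (fst ix)) (combine (seq 0 (length h)) h))
         ++ map (fun pr => (fst pr, EResp (RVal (snd pr)))) E /\
    well_formed h' /\ complete h'.

Definition qtime (n : nat) : Q := inject_Z (Z.of_nat n).

(* A linearization of the complete history h conforming to T: the operations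
   (identified by their invocation positions), listed in the order of their
   distinct linearization points pt, each point lying within the operation's
   invocation-response interval (positions of h serve as times), and the
   responses are those of a sequential application from s0 according to delta. *)
Definition linearizable_conforming (h : list (proc * ev)) : Prop :=
  exists (L : list nat) (pt : nat -> Q) (st : nat -> St),
    NoDup L /\
    (forall i, In i L <-> is_inv h i) /\
    (forall k, S k < length L -> Qlt (pt (nth k L 0)) (pt (nth (S k) L 0))) /\
    st 0 = s0 /\
    forall k, k < length L ->
      exists j p o r,
        resp_of h (nth k L 0) j /\
        nth_error h (nth k L 0) = Some (p, EInv o) /\
        nth_error h j = Some (p, EResp (RVal r)) /\
        Qle (qtime (nth k L 0)) (pt (nth k L 0)) /\ Qle (pt (nth k L 0)) (qtime j) /\
        delta (st k) o (st (S k)) r.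

End Model.

(* The operations are linearized in the order of their successful GCAS on S at
   line 12.  Such a GCAS applies, to the state held in S, an operation announced
   in A whose owner is still waiting with H = (t, NULL); this happens inside the
   operation's interval.  S can change again only after some process has copied
   the installed response into the owner's H at line 6, because a GCAS at line 12
   succeeds only on the value of S read before that copy.  Hence an operation is
   applied at most once, and its owner returns exactly the response of its
   application.  An invariant of all reachable configurations records this against
   a ghost log of the applied operations.  From the log, the history is completed
   by dropping the pending operations that were never applied and appending the
   responses of the others; the k-th logged operation is placed at distance
   1/(k+1) before the first history event after its application, which keeps the
   points distinct and in log order. *)

From Stdlib Require Import List Arith QArith Lia Lqa ClassicalEpsilon Permutation.
Import ListNotations.
Local Open Scope nat_scope.

Local Arguments RNull {RES}.
Local Arguments RBot {RES}.
Local Arguments RVal {RES}.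
Local Arguments EInv {OP RES}.
Local Arguments EResp {OP RES}.
Local Arguments Idle {OP RES St}.
Local Arguments At2 {OP RES St}.
Local Arguments At3 {OP RES St}.
Local Arguments At4 {OP RES St}.
Local Arguments At5 {OP RES St}.
Local Arguments At6 {OP RES St}.
Local Arguments At7 {OP RES St}.
Local Arguments At8 {OP RES St}.
Local Arguments At9 {OP RES St}.
Local Arguments At12 {OP RES St}.
Local Arguments At13 {OP RES St}.
Local Arguments At14 {OP RES St}.

Lemma least_witness (P : nat -> Prop) :
  (exists n, P n) -> exists n, P n /\ forall m, m < n -> ~ P m.
Proof.
  intros [n Hn]. induction n as [n IH] using lt_wf_ind.
  destruct (classic (exists m, m < n /\ P m)) as [[m [Hmn Hm]]|Hno].
  - exact (IH m Hmn Hm).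
  - exists n. split; [exact Hn|]. intros m Hmn Hm. apply Hno. eauto.
Qed.

Lemma upd_eq {X} (f : proc -> X) p x : upd f p x p = x.
Proof. unfold upd. rewrite Nat.eqb_refl. reflexivity. Qed.

Lemma upd_neq {X} (f : proc -> X) p x q : q <> p -> upd f p x q = f q.
Proof. intros H. unfold upd. apply Nat.eqb_neq in H. rewrite H. reflexivity. Qed.

Lemma nth_error_snoc_last {A} (h : list A) x : nth_error (h ++ [x]) (length h) = Some x.
Proof. rewrite nth_error_app2 by lia. rewrite Nat.sub_diag. reflexivity. Qed.

Lemma nth_error_snoc_inv {A} (h : list A) x i y : nth_error (h ++ [x]) i = Some y ->
  (i < length h /\ nth_error h i = Some y) \/ (i = length h /\ y = x).
Proof.
  intros H. destruct (Nat.lt_ge_cases i (length h)).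
  - left. rewrite nth_error_app1 in H; auto.
  - right. rewrite nth_error_app2 in H by lia. destruct (i - length h) eqn:E; simpl in H.
    + inversion H. split; auto. lia.
    + destruct n; discriminate.
Qed.

Lemma NoDup_snoc {A} (l : list A) x : NoDup l -> ~ In x l -> NoDup (l ++ [x]).
Proof.
  intros H1 H2. apply (Permutation_NoDup (l := x :: l)).
  - apply Permutation_cons_append.
  - constructor; auto.
Qed.

(** * Histories *)

Section Histories.
Context {OP RES : Type}.
Notation evt := (ev OP RES).
Implicit Types (h : list (proc * evt)).

Definition proc_events (p : proc) h : list evt :=
  map snd (filter (fun x => Nat.eqb (fst x) p) h).

Lemma proc_events_app p l1 l2 : proc_events p (l1 ++ l2) = proc_events p l1 ++ proc_events p l2.
Proof. unfold proc_events. rewrite filter_app, map_app. reflexivity. Qed.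

Lemma proc_events_cons_self p e l : proc_events p ((p, e) :: l) = e :: proc_events p l.
Proof. unfold proc_events. simpl. rewrite Nat.eqb_refl. reflexivity. Qed.

Lemma proc_events_cons_other p q e l : q <> p -> proc_events p ((q, e) :: l) = proc_events p l.
Proof.
  intros Hqp. unfold proc_events. simpl. apply Nat.eqb_neq in Hqp. rewrite Hqp. reflexivity.
Qed.

Lemma proc_events_nil p l : (forall x, In x l -> fst x <> p) -> proc_events p l = [].
Proof.
  induction l as [|[q e] l IH]; intros Hl; [reflexivity|].
  rewrite proc_events_cons_other by exact (Hl (q, e) (or_introl eq_refl)).
  apply IH. intros x Hx. apply Hl. right; exact Hx.
Qed.

Lemma proc_events_snoc_self p e h : proc_events p (h ++ [(p, e)]) = proc_events p h ++ [e].
Proof. rewrite proc_events_app, proc_events_cons_self. reflexivity. Qed.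

Lemma proc_events_snoc_other q p e h : p <> q -> proc_events q (h ++ [(p, e)]) = proc_events q h.
Proof. intros. rewrite proc_events_app, proc_events_cons_other by auto. apply app_nil_r. Qed.

Lemma proc_events_firstn_succ p h n :
  proc_events p (firstn (S n) h) = proc_events p (firstn n h) ++
    match nth_error h n with Some (q, e) => if Nat.eqb q p then [e] else [] | None => [] end.
Proof.
  revert n. induction h as [|[q e] h IH]; intros n; [destruct n; reflexivity|].
  destruct n as [|n].
  - unfold proc_events. simpl. destruct (Nat.eqb q p); reflexivity.
  - change (firstn (S (S n)) ((q, e) :: h)) with ((q, e) :: firstn (S n) h).
    change (firstn (S n) ((q, e) :: h)) with ((q, e) :: firstn n h).
    destruct (Nat.eq_dec q p) as [->|Hqp].
    + rewrite !proc_events_cons_self, IH. reflexivity.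
    + rewrite !proc_events_cons_other by exact Hqp. apply IH.
Qed.

Lemma proc_events_firstn_at p h i e :
  nth_error h i = Some (p, e) -> proc_events p (firstn (S i) h) = proc_events p (firstn i h) ++ [e].
Proof. intros Hi. rewrite proc_events_firstn_succ, Hi, Nat.eqb_refl. reflexivity. Qed.

Lemma proc_events_firstn_gap p h i y :
  i <= y -> (forall k q e, i <= k -> k < y -> nth_error h k = Some (q, e) -> q <> p) ->
  proc_events p (firstn y h) = proc_events p (firstn i h).
Proof.
  intros Hiy Hgap. induction y as [|y IH]; [now replace i with 0 by lia|].
  destruct (Nat.eq_dec i (S y)) as [->|Hne]; [reflexivity|].
  rewrite proc_events_firstn_succ, IH by (try lia; intros; eapply Hgap; eauto; lia).
  destruct (nth_error h y) as [[q e]|] eqn:Hy; [|apply app_nil_r].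
  pose proof (Hgap y q e ltac:(lia) ltac:(lia) Hy) as Hqp. apply Nat.eqb_neq in Hqp.
  rewrite Hqp. apply app_nil_r.
Qed.

Lemma proc_events_last h p i e :
  nth_error h i = Some (p, e) ->
  (forall x q e', i < x -> nth_error h x = Some (q, e') -> q <> p) ->
  proc_events p h = proc_events p (firstn i h) ++ [e].
Proof.
  intros Hi Hlast. assert (Hil : i < length h) by (apply nth_error_Some; congruence).
  rewrite <- (firstn_all h) at 1.
  rewrite (proc_events_firstn_gap p h (S i) (length h)) by (auto; intros; eapply Hlast; eauto; lia).
  apply proc_events_firstn_at. exact Hi.
Qed.

Lemma alternating_two_invocations b (l1 : list evt) o1 o2 l2 :
  ~ alternating b (l1 ++ EInv o1 :: EInv o2 :: l2).
Proof.
  revert b. induction l1 as [|e l1 IH]; intros b H.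
  - destruct H as [-> [Hf _]]. discriminate.
  - simpl in H. destruct e; destruct H as [_ H]; exact (IH _ H).
Qed.

Lemma alternating_prefix b (l1 l2 : list evt) : alternating b (l1 ++ l2) -> alternating b l1.
Proof.
  revert b. induction l1 as [|e l1 IH]; intros b H; simpl; [exact I|].
  simpl in H. destruct e; destruct H; split; eauto.
Qed.

Lemma alternating_snoc_resp b (l : list evt) o v :
  alternating b (l ++ [EInv o]) -> alternating b (l ++ [EInv o; EResp v]).
Proof.
  revert b. induction l as [|e l IH]; intros b H; simpl in *.
  - destruct H. auto.
  - destruct e; destruct H; split; auto.
Qed.

Lemma alternating_snoc_inv b (l : list evt) o :
  alternating b l -> (l = [] -> b = true) -> (forall l' o', l <> l' ++ [EInv o']) ->
  alternating b (l ++ [EInv o]).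
Proof.
  revert b. induction l as [|x l IH]; intros b Hl Hnil Hlast.
  - split; [exact (Hnil eq_refl)|exact I].
  - destruct x as [o'|v]; destruct Hl as [Hb Hl]; split; auto; apply IH; auto.
    + intros ->. destruct (Hlast [] o' eq_refl).
    + intros l' o'' E. apply (Hlast (EInv o' :: l') o''). rewrite E. reflexivity.
    + intros l' o'' E. apply (Hlast (EResp v :: l') o''). rewrite E. reflexivity.
Qed.

Lemma alternating_firstn b h p n :
  alternating b (proc_events p h) -> alternating b (proc_events p (firstn n h)).
Proof.
  rewrite <- (firstn_skipn n h) at 1. rewrite proc_events_app. apply alternating_prefix.
Qed.

Lemma pending_no_later_event h i p o :
  well_formed h -> nth_error h i = Some (p, EInv o) -> ~ (exists j, resp_of h i j) ->
  forall x q e, i < x -> nth_error h x = Some (q, e) -> q <> p.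
Proof.
  intros WF Hi Hnr x q e Hx Hxe Hqp. subst q.
  destruct (least_witness (fun x => i < x /\ exists e, nth_error h x = Some (p, e)))
    as [y [[Hy [e' Hye]] Hmin]]; [eauto|].
  assert (Hgap : forall k q e1, S i <= k -> k < y -> nth_error h k = Some (q, e1) -> q <> p).
  { intros k q e1 Hk1 Hk2 Hke Hqp. subst q. apply (Hmin k); eauto. }
  destruct e' as [o'|v].
  - apply (alternating_two_invocations true (proc_events p (firstn i h)) o o' []).
    pose proof (alternating_firstn _ _ p (S y) (WF p)) as Halt.
    rewrite (proc_events_firstn_at p h y _ Hye), (proc_events_firstn_gap p h (S i) y) in Halt
      by (auto; lia).
    rewrite (proc_events_firstn_at p h i _ Hi), <- app_assoc in Halt. exact Halt.
  - apply Hnr. exists y. split; [exact Hy|]. exists p, o, v.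
    split; [exact Hi|]. split; [exact Hye|]. intros k q e1 Hk1 Hk2. apply Hgap; lia.
Qed.

Lemma pending_unique h i i' p o o' :
  well_formed h -> nth_error h i = Some (p, EInv o) -> ~ (exists j, resp_of h i j) ->
  nth_error h i' = Some (p, EInv o') -> ~ (exists j, resp_of h i' j) -> i = i'.
Proof.
  intros WF Hi Hnr Hi' Hnr'. destruct (lt_eq_lt_dec i i') as [[Hlt|]|Hlt]; auto; exfalso.
  - exact (pending_no_later_event h i p o WF Hi Hnr i' p _ Hlt Hi' eq_refl).
  - exact (pending_no_later_event h i' p o' WF Hi' Hnr' i p _ Hlt Hi eq_refl).
Qed.

Definition latest_inv (h : list (proc * evt)) p i (o : OP) :=
  nth_error h i = Some (p, EInv o) /\ forall x q e, i < x -> nth_error h x = Some (q, e) -> q <> p.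

Lemma latest_inv_snoc h q i o p e :
  latest_inv h q i o -> p <> q -> latest_inv (h ++ [(p, e)]) q i o.
Proof.
  intros [H1 H2] Hpq. split.
  - rewrite nth_error_app1; auto. apply nth_error_Some. congruence.
  - intros x q' e' Hx Hxe. apply nth_error_snoc_inv in Hxe. destruct Hxe as [[_ Hxe]|[_ Hxe]].
    + eapply H2; eauto.
    + inversion Hxe; subst. auto.
Qed.

Lemma resp_of_snoc h x i j : resp_of (h ++ [x]) i j -> j < length h -> resp_of h i j.
Proof.
  intros [Hij [p [o [v [H1 [H2 H3]]]]]] Hj. split; auto. exists p, o, v.
  rewrite nth_error_app1 in H1 by lia. rewrite nth_error_app1 in H2 by lia. split; auto.
  split; auto.
  intros k q e Hk1 Hk2 Hk. apply (H3 k q e); auto. rewrite nth_error_app1 by lia. auto.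
Qed.

Lemma resp_of_lt h i j : resp_of h i j -> j < length h.
Proof. intros [_ [p [o [v [_ [H _]]]]]]. apply nth_error_Some. congruence. Qed.

Lemma resp_of_last h p i o e i' :
  latest_inv h p i o -> resp_of (h ++ [(p, e)]) i' (length h) -> i' = i.
Proof.
  intros [Hi Hnl] [Hlt [p' [o' [v [H1 [H2 H3]]]]]].
  rewrite nth_error_snoc_last in H2. inversion H2; subst p'.
  rewrite nth_error_app1 in H1 by lia.
  assert (Hil : i < length h) by (apply nth_error_Some; congruence).
  destruct (lt_eq_lt_dec i' i) as [[Hl|Hl]|Hl]; auto; exfalso.
  - apply (H3 i p (EInv o)); auto. rewrite nth_error_app1; auto.
  - apply (Hnl i' p (EInv o')); auto.
Qed.

Lemma history_snoc (tr : list (proc * option evt)) p l :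
  history (tr ++ [(p, l)]) = history tr ++ match l with Some e => [(p, e)] | None => [] end.
Proof.
  unfold history. rewrite flat_map_app. simpl.
  destruct l; simpl; rewrite ?app_nil_r; reflexivity.
Qed.

End Histories.

(** * Completing a history along a linearization log *)

Section Renumbering.
Context {X : Type} (keep : nat -> bool).

Definition kept (l : list X) (s : nat) : list X :=
  map snd (filter (fun ix => keep (fst ix)) (combine (seq s (length l)) l)).

Definition nkept (s x : nat) : nat := length (filter keep (seq s x)).

Lemma kept_cons a l s : kept (a :: l) s = (if keep s then [a] else []) ++ kept l (S s).
Proof. unfold kept. simpl. destruct (keep s); reflexivity. Qed.

Lemma kept_app l1 l2 s : kept (l1 ++ l2) s = kept l1 s ++ kept l2 (s + length l1).
Proof.
  revert s. induction l1 as [|a l1 IH]; intros s.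
  - simpl. rewrite Nat.add_0_r. reflexivity.
  - simpl app. rewrite !kept_cons, IH, app_assoc. f_equal. f_equal. simpl. lia.
Qed.

Lemma nkept_S s x : nkept s (S x) = (if keep s then 1 else 0) + nkept (S s) x.
Proof. unfold nkept. simpl. destruct (keep s); reflexivity. Qed.

Lemma nkept_add s x d : nkept s (x + d) = nkept s x + nkept (s + x) d.
Proof. unfold nkept. rewrite seq_app, filter_app, length_app. reflexivity. Qed.

Lemma nkept_mono s x y : x <= y -> nkept s x <= nkept s y.
Proof. intros Hxy. replace y with (x + (y - x)) by lia. rewrite nkept_add. lia. Qed.

Lemma nkept_strict s x y : keep (s + x) = true -> x < y -> nkept s x < nkept s y.
Proof.
  intros Hk Hxy.
  enough (nkept s (S x) = S (nkept s x)) by (pose proof (nkept_mono s (S x) y Hxy); lia).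
  rewrite <- Nat.add_1_r, nkept_add, nkept_S, Hk. unfold nkept at 2. simpl. lia.
Qed.

Lemma length_kept l s : length (kept l s) = nkept s (length l).
Proof.
  revert s. induction l as [|a l IH]; intros s; [reflexivity|].
  rewrite kept_cons, length_app, IH. simpl length. rewrite nkept_S. destruct (keep s); reflexivity.
Qed.

Lemma nth_error_kept l s x :
  x < length l -> keep (s + x) = true -> nth_error (kept l s) (nkept s x) = nth_error l x.
Proof.
  revert s x. induction l as [|a l IH]; intros s x Hx Hk; simpl in Hx; [lia|].
  rewrite kept_cons. destruct x as [|x].
  - rewrite Nat.add_0_r in Hk. rewrite Hk. reflexivity.
  - rewrite nkept_S. simpl nth_error at 2.
    rewrite <- (IH (S s) x) by (try lia; rewrite <- Hk; f_equal; lia).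
    destruct (keep s); reflexivity.
Qed.

Lemma nth_error_kept_inv l s y e : nth_error (kept l s) y = Some e ->
  exists x, x < length l /\ keep (s + x) = true /\ nkept s x = y /\ nth_error l x = Some e.
Proof.
  revert s y. induction l as [|a l IH]; intros s y H.
  - unfold kept in H. destruct y; discriminate.
  - rewrite kept_cons in H.
    assert (Hrest : nth_error (kept l (S s)) (y - if keep s then 1 else 0) = Some e ->
      (if keep s then 0 < y else True) ->
      exists x, x < length (a :: l) /\ keep (s + x) = true /\ nkept s x = y /\
        nth_error (a :: l) x = Some e).
    { intros Hl Hy. destruct (IH (S s) _ Hl) as [x [H1 [H2 [H3 H4]]]]. exists (S x). simpl.
      repeat split; auto; [lia| |]. { rewrite <- H2. f_equal; lia. }
      rewrite nkept_S, H3. destruct (keep s); lia. }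
    destruct (keep s) eqn:Hk; [destruct y as [|y]|]; simpl in H.
    + injection H as <-. exists 0. rewrite Nat.add_0_r. simpl. repeat split; auto; lia.
    + apply Hrest; [rewrite Nat.sub_1_r; exact H|lia].
    + apply Hrest; [rewrite Nat.sub_0_r; exact H|exact I].
Qed.

End Renumbering.

Lemma proc_events_kept {OP RES} (keep : nat -> bool) p (l : list (proc * ev OP RES)) s :
  (forall x e, nth_error l x = Some (p, e) -> keep (s + x) = true) ->
  proc_events p (kept keep l s) = proc_events p l.
Proof.
  revert s. induction l as [|[q e] l IH]; intros s H; [reflexivity|].
  assert (Htail : forall x e', nth_error l x = Some (p, e') -> keep (S s + x) = true).
  { intros x e' Hx. rewrite <- (H (S x) e' Hx). f_equal; lia. }
  rewrite kept_cons. destruct (Nat.eq_dec q p) as [->|Hne].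
  - assert (Hk : keep s = true) by (rewrite <- (Nat.add_0_r s); exact (H 0 e eq_refl)).
    rewrite Hk. simpl app. rewrite !proc_events_cons_self, IH; auto.
  - rewrite proc_events_cons_other, proc_events_app, IH by auto.
    destruct (keep s); simpl; [rewrite proc_events_cons_other by auto|]; reflexivity.
Qed.

Section FilterMap.
Context {X Y : Type} (f : X -> option Y).

Definition filter_map (l : list X) : list Y :=
  flat_map (fun x => match f x with Some y => [y] | None => [] end) l.

Lemma filter_map_app l1 l2 : filter_map (l1 ++ l2) = filter_map l1 ++ filter_map l2.
Proof. apply flat_map_app. Qed.

Lemma nth_error_filter_map l k x y : nth_error l k = Some x -> f x = Some y ->
  exists e, nth_error (filter_map l) e = Some y /\
    forall e' y', e' < e -> nth_error (filter_map l) e' = Some y' ->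
      exists k' x', k' < k /\ nth_error l k' = Some x' /\ f x' = Some y'.
Proof.
  revert k. induction l as [|a l IH]; intros k Hk Hf; [destruct k; discriminate|].
  unfold filter_map. simpl. fold (filter_map l). destruct k as [|k].
  - injection Hk as <-. rewrite Hf. exists 0. split; [reflexivity|]. intros; lia.
  - destruct (IH k Hk Hf) as [e [He Hbefore]]. destruct (f a) eqn:Hfa.
    + exists (S e). split; [exact He|]. intros [|e'] y' He' Hn; simpl in Hn.
      * injection Hn as <-. exists 0, a. split; [lia|]. auto.
      * destruct (Hbefore e' y') as [k' [x' [Hk1 [Hk2 Hk3]]]]; [lia|exact Hn|].
        exists (S k'), x'. split; [lia|]. auto.
    + exists e. split; [exact He|]. intros e' y' He' Hn.
      destruct (Hbefore e' y') as [k' [x' [Hk1 [Hk2 Hk3]]]]; auto.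
      exists (S k'), x'. split; [lia|]. auto.
Qed.

End FilterMap.

Lemma NoDup_map_comp {X} (f : X -> nat) (g : nat -> nat) l : NoDup (map f l) ->
  (forall a b, In a l -> In b l -> g (f a) = g (f b) -> f a = f b) ->
  NoDup (map (fun x => g (f x)) l).
Proof.
  induction l as [|a l IH]; intros Hnd Hinj; simpl; constructor; inversion Hnd as [|u v Hn Hd]; subst.
  - intros Hin. apply in_map_iff in Hin. destruct Hin as [b [Hb1 Hb2]].
    apply Hn. rewrite (Hinj a b); [apply in_map; auto|left; auto|right; auto|auto].
  - apply IH; auto. intros; apply Hinj; auto; right; auto.
Qed.

Lemma qtime_le a b : a <= b -> (qtime a <= qtime b)%Q.
Proof. intros H. unfold qtime. rewrite <- Zle_Qle. lia. Qed.

Lemma qtime_succ a : (qtime (S a) == qtime a + 1)%Q.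
Proof.
  unfold qtime. rewrite Znat.Nat2Z.inj_succ. unfold Z.succ. rewrite inject_Z_plus.
  reflexivity.
Qed.

Lemma Qinv_succ_pos k : (0 < 1 # Pos.of_succ_nat k)%Q.
Proof. reflexivity. Qed.

Lemma Qinv_succ_le1 k : (1 # Pos.of_succ_nat k <= 1)%Q.
Proof. unfold Qle. simpl. lia. Qed.

Lemma Qinv_succ_decr k : (1 # Pos.of_succ_nat (S k) < 1 # Pos.of_succ_nat k)%Q.
Proof. unfold Qlt. simpl. rewrite !Znat.Zpos_P_of_succ_nat. lia. Qed.

Section Log.
Context (OP RES St : Type) (delta : St -> OP -> St -> RES -> Prop) (s0 : St).
Notation evt := (ev OP RES).

(** A log entry [(i, n, s, r)] records an operation identified by [i], the length [n]
    of the history at the moment it took effect, and the state [s] and response [r]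
    that its application produced. *)
Definition entry : Type := (nat * nat * St * RES)%type.
Definition ent_id (g : entry) : nat := fst (fst (fst g)).
Definition ent_time (g : entry) : nat := snd (fst (fst g)).
Definition ent_state (g : entry) : St := snd (fst g).
Definition ent_resp (g : entry) : RES := snd g.

Definition state_before (G : list entry) (k : nat) : St :=
  match k with
  | 0 => s0
  | S k' => match nth_error G k' with Some g => ent_state g | None => s0 end
  end.

(** The operation whose invocation sits at position [y] of the completed history is
    the [k]-th entry [g] of [G] (counting from [k0]); its point [pos (ent_time g) - 1/(k+1)]
    precedes the first event recorded after it took effect and follows every earlier
    entry. *)
Fixpoint lin_point (pos : nat -> nat) (y : nat) (G : list entry) (k0 : nat) : Q :=
  match G with
  | [] => 0%Q
  | g :: G' => if Nat.eqb (pos (ent_id g)) y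
               then (qtime (pos (ent_time g)) - (1 # Pos.of_succ_nat k0))%Q
               else lin_point pos y G' (S k0)
  end.

Lemma lin_point_nth pos G : NoDup (map (fun g => pos (ent_id g)) G) ->
  forall k m g, nth_error G k = Some g ->
  lin_point pos (pos (ent_id g)) G m = (qtime (pos (ent_time g)) - (1 # Pos.of_succ_nat (m + k)))%Q.
Proof.
  induction G as [|a G IH]; intros Hnd k m g Hk; [destruct k; discriminate|].
  simpl. inversion Hnd as [|u v Hn Hd]; subst. destruct k as [|k].
  - injection Hk as <-. rewrite Nat.eqb_refl, Nat.add_0_r. reflexivity.
  - simpl in Hk. destruct (Nat.eqb_spec (pos (ent_id a)) (pos (ent_id g))) as [E|_].
    + exfalso. apply Hn. rewrite E. apply (in_map (fun g => pos (ent_id g))).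
      eapply nth_error_In; eauto.
    + rewrite (IH Hd k (S m) g Hk). do 3 f_equal. lia.
Qed.

Definition time_sorted (G : list entry) : Prop :=
  forall k g g', nth_error G k = Some g -> nth_error G (S k) = Some g' -> ent_time g <= ent_time g'.

Section Completion.
Variables (h : list (proc * evt)) (G : list entry).
Hypothesis h_wf : well_formed h.
Hypothesis log_ids_NoDup : NoDup (map ent_id G).
Hypothesis log_entry_ok : forall k g, nth_error G k = Some g ->
  (exists p o, nth_error h (ent_id g) = Some (p, EInv o) /\
               delta (state_before G k) o (ent_state g) (ent_resp g)) /\
  ent_id g < ent_time g /\ ent_time g <= length h.
Hypothesis log_time_sorted : time_sorted G.
Hypothesis log_covers_responses : forall i j, resp_of h i j ->
  exists k g p, nth_error G k = Some g /\ ent_id g = i /\ ent_time g <= j /\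
                nth_error h j = Some (p, EResp (RVal (ent_resp g))).

Definition keep (i : nat) : bool :=
  if excluded_middle_informative (pending h i /\ ~ In i (map ent_id G)) then false else true.

Definition pendingb (i : nat) : bool :=
  if excluded_middle_informative (pending h i) then true else false.

Definition owner (i : nat) : proc :=
  match nth_error h i with Some (p, _) => p | None => 0 end.

Definition appended_resp (g : entry) : option (proc * RES) :=
  if pendingb (ent_id g) then Some (owner (ent_id g), ent_resp g) else None.

Definition resp_event (pr : proc * RES) : proc * evt := (fst pr, EResp (RVal (snd pr))).

Definition appended_events : list (proc * evt) := map resp_event (filter_map appended_resp G).

Definition completion : list (proc * evt) := kept keep h 0 ++ appended_events.

Definition pos : nat -> nat := nkept keep 0.

Lemma keep_logged g : In g G -> keep (ent_id g) = true.
Proof.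
  intros Hg. unfold keep. destruct excluded_middle_informative as [[_ Hn]|]; auto.
  exfalso. apply Hn, in_map, Hg.
Qed.

Lemma keep_resp j p v : nth_error h j = Some (p, EResp v) -> keep j = true.
Proof.
  intros Hj. unfold keep. destruct excluded_middle_informative as [[[[q [o Hq]] _] _]|]; auto.
  congruence.
Qed.

Lemma pending_of_dropped x : keep x = false -> pending h x.
Proof. unfold keep. destruct excluded_middle_informative as [[H _]|]; auto. discriminate. Qed.

Lemma logged_of_kept_pending x : pending h x -> keep x = true -> In x (map ent_id G).
Proof.
  intros Hp. unfold keep. destruct excluded_middle_informative as [|Hn]; [discriminate|].
  intros _. apply NNPP. intros Hx. exact (Hn (conj Hp Hx)).
Qed.

Lemma pos_lt x y : keep x = true -> x < y -> pos x < pos y.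
Proof. intros Hk. apply nkept_strict. exact Hk. Qed.

Lemma pos_le x y : x <= y -> pos x <= pos y.
Proof. apply nkept_mono. Qed.

Lemma length_kept_history : length (kept keep h 0) = pos (length h).
Proof. apply length_kept. Qed.

Lemma nth_error_completion_kept x : x < length h -> keep x = true ->
  nth_error completion (pos x) = nth_error h x.
Proof.
  intros Hx Hk. unfold completion. rewrite nth_error_app1.
  - apply nth_error_kept; auto.
  - rewrite length_kept_history. apply pos_lt; auto.
Qed.

Lemma nth_error_completion_kept_inv y e :
  nth_error completion y = Some e -> y < length (kept keep h 0) ->
  exists x, x < length h /\ keep x = true /\ pos x = y /\ nth_error h x = Some e.
Proof.
  intros Hy Hl. unfold completion in Hy. rewrite nth_error_app1 in Hy by auto.
  apply nth_error_kept_inv in Hy. exact Hy.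
Qed.

Lemma nth_error_completion_appended e :
  nth_error completion (length (kept keep h 0) + e) =
  option_map resp_event (nth_error (filter_map appended_resp G) e).
Proof.
  unfold completion. rewrite nth_error_app2, Nat.add_comm, Nat.add_sub by lia.
  unfold appended_events. rewrite nth_error_map. reflexivity.
Qed.

Lemma completion_resp_of_complete i j : resp_of h i j -> resp_of completion (pos i) (pos j).
Proof.
  intros Hr. pose proof Hr as [Hij [p [o [v [Hi [Hj Hbetween]]]]]].
  assert (Hki : keep i = true).
  { destruct (keep i) eqn:E; auto. destruct (pending_of_dropped i E) as [_ Hn]. exfalso; eauto. }
  assert (Hkj : keep j = true) by (eapply keep_resp; eauto).
  assert (Hjl : j < length h) by (apply nth_error_Some; congruence).
  split; [apply pos_lt; auto|].
  exists p, o, v. rewrite !nth_error_completion_kept by (auto; lia).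
  split; [exact Hi|]. split; [exact Hj|].
  intros k q e Hk1 Hk2 Hke.
  assert (Hkl : k < length (kept keep h 0)).
  { rewrite length_kept_history. pose proof (pos_le j (length h)). lia. }
  destruct (nth_error_completion_kept_inv k _ Hke Hkl) as [x [Hx1 [Hx2 [<- Hx4]]]].
  apply (Hbetween x q e); auto.
  - destruct (Nat.lt_ge_cases i x); auto. pose proof (pos_le x i). lia.
  - destruct (Nat.lt_ge_cases x j); auto. pose proof (pos_le j x). lia.
Qed.

Lemma completion_resp_of_pending k g : nth_error G k = Some g -> pending h (ent_id g) ->
  exists e, resp_of completion (pos (ent_id g)) (length (kept keep h 0) + e) /\
    nth_error completion (length (kept keep h 0) + e) =
      Some (owner (ent_id g), EResp (RVal (ent_resp g))).
Proof.
  intros Hk Hp. pose proof Hp as [[p [o Hi]] Hnr].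
  assert (Happ : appended_resp g = Some (owner (ent_id g), ent_resp g)).
  { unfold appended_resp, pendingb. destruct excluded_middle_informative; [reflexivity|contradiction]. }
  destruct (nth_error_filter_map appended_resp G k g _ Hk Happ) as [e [He Hbefore]].
  assert (Howner : owner (ent_id g) = p) by (unfold owner; rewrite Hi; reflexivity).
  assert (Hkg : keep (ent_id g) = true) by (apply keep_logged; eapply nth_error_In; eauto).
  assert (Hil : ent_id g < length h) by (apply nth_error_Some; congruence).
  assert (Hne : nth_error completion (length (kept keep h 0) + e) =
                Some (owner (ent_id g), EResp (RVal (ent_resp g)))).
  { rewrite nth_error_completion_appended, He. reflexivity. }
  exists e. split; [|exact Hne]. split.
  { rewrite length_kept_history. pose proof (pos_lt (ent_id g) (length h) Hkg Hil). lia. }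
  exists p, o, (RVal (ent_resp g)). rewrite nth_error_completion_kept by auto.
  split; [exact Hi|]. split; [rewrite Hne, Howner; reflexivity|].
  intros y q e1 Hy1 Hy2 Hye Hqp. subst q.
  destruct (Nat.lt_ge_cases y (length (kept keep h 0))) as [Hyl|Hyl].
  - destruct (nth_error_completion_kept_inv y _ Hye Hyl) as [x [Hx1 [Hx2 [<- Hx4]]]].
    apply (pending_no_later_event h (ent_id g) p o h_wf Hi Hnr x p e1); auto.
    destruct (Nat.lt_ge_cases (ent_id g) x); auto. pose proof (pos_le x (ent_id g)). lia.
  - replace y with (length (kept keep h 0) + (y - length (kept keep h 0))) in Hye by lia.
    rewrite nth_error_completion_appended in Hye.
    destruct (nth_error (filter_map appended_resp G) (y - length (kept keep h 0))) as [[q r]|] eqn:Hq;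
      [|discriminate].
    injection Hye as -> _.
    destruct (Hbefore (y - length (kept keep h 0)) (p, r)) as [k' [g' [Hk1 [Hk2 Hk3]]]];
      [lia|exact Hq|].
    unfold appended_resp, pendingb in Hk3.
    destruct excluded_middle_informative as [Hp'|]; [|discriminate].
    injection Hk3 as Hown _. pose proof Hp' as [[p' [o' Hi']] Hnr'].
    assert (p' = p) by (rewrite <- Hown; unfold owner; rewrite Hi'; reflexivity). subst p'.
    pose proof (pending_unique h _ _ p o' o h_wf Hi' Hnr' Hi Hnr) as Heq.
    assert (k' = k); [|lia].
    eapply NoDup_nth_error; [exact log_ids_NoDup| |].
    + rewrite length_map. apply nth_error_Some. congruence.
    + rewrite !nth_error_map, Hk, Hk2. simpl. rewrite Heq. reflexivity.
Qed.

Lemma completion_inv y :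
  is_inv completion y -> exists k g, nth_error G k = Some g /\ pos (ent_id g) = y.
Proof.
  intros [p [o Hy]]. destruct (Nat.lt_ge_cases y (length (kept keep h 0))) as [Hyl|Hyl].
  - destruct (nth_error_completion_kept_inv y _ Hy Hyl) as [x [Hx1 [Hx2 [<- Hx4]]]].
    assert (Hin : In x (map ent_id G)).
    { destruct (classic (exists j, resp_of h x j)) as [[j Hj]|Hnj].
      - destruct (log_covers_responses x j Hj) as [k [g [p' [Hk [<- _]]]]].
        apply in_map. eapply nth_error_In; eauto.
      - apply logged_of_kept_pending; auto. split; eauto. exists p, o. auto. }
    apply in_map_iff in Hin. destruct Hin as [g [<- Hg]].
    destruct (In_nth_error _ _ Hg) as [k Hk]. exists k, g. auto.
  - replace y with (length (kept keep h 0) + (y - length (kept keep h 0))) in Hy by lia.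
    rewrite nth_error_completion_appended in Hy.
    destruct (nth_error (filter_map appended_resp G) _); discriminate.
Qed.

Lemma completion_entry_resp k g : nth_error G k = Some g ->
  exists j p o, resp_of completion (pos (ent_id g)) j /\
    nth_error completion (pos (ent_id g)) = Some (p, EInv o) /\
    nth_error completion j = Some (p, EResp (RVal (ent_resp g))) /\
    pos (ent_time g) <= j.
Proof.
  intros Hk. destruct (classic (exists j, resp_of h (ent_id g) j)) as [[j Hj]|Hnj].
  - destruct (log_covers_responses _ _ Hj) as [k' [g' [p' [Hk' [Hid [Hn Hjr]]]]]].
    assert (k' = k).
    { eapply NoDup_nth_error; [exact log_ids_NoDup| |].
      - rewrite length_map. apply nth_error_Some. congruence.
      - rewrite !nth_error_map, Hk, Hk'. simpl. rewrite Hid. reflexivity. }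
    subst k'. rewrite Hk in Hk'. injection Hk' as <-.
    pose proof (completion_resp_of_complete _ _ Hj) as Hr'.
    pose proof Hr' as [_ [p [o [v [H1 [H2 _]]]]]].
    assert (Hjl : j < length h) by (apply nth_error_Some; congruence).
    assert (Hkj : keep j = true) by (eapply keep_resp; eauto).
    rewrite nth_error_completion_kept in H2 by auto. rewrite H2 in Hjr. injection Hjr as <- <-.
    exists (pos j), p, o. split; [exact Hr'|]. split; [exact H1|].
    split; [rewrite nth_error_completion_kept by auto; exact H2|]. apply pos_le. exact Hn.
  - assert (Hp : pending h (ent_id g)).
    { split; auto. destruct (log_entry_ok k g Hk) as [[p [o [Hi _]]] _]. exists p, o; auto. }
    destruct (completion_resp_of_pending k g Hk Hp) as [e [Hr He]].
    pose proof Hr as [_ [p [o [v [H1 [H2 _]]]]]]. rewrite He in H2. injection H2 as <- _.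
    exists (length (kept keep h 0) + e), (owner (ent_id g)), o.
    split; [exact Hr|]. split; [exact H1|]. split; [exact He|].
    rewrite length_kept_history. destruct (log_entry_ok k g Hk) as [_ [_ Hle]].
    pose proof (pos_le _ _ Hle). lia.
Qed.

Lemma completion_complete : complete completion.
Proof.
  intros y Hy. destruct (completion_inv y Hy) as [k [g [Hk <-]]].
  destruct (completion_entry_resp k g Hk) as [j [_ [_ [Hr _]]]]. eauto.
Qed.

Lemma pending_owner x : pending h x -> exists o, nth_error h x = Some (owner x, EInv o).
Proof. intros [[p [o Hx]] _]. exists o. unfold owner. rewrite Hx. reflexivity. Qed.

Lemma proc_events_appended_nil p :
  (forall g, In g G -> pending h (ent_id g) -> owner (ent_id g) <> p) ->
  proc_events p appended_events = [].
Proof.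
  intros Hno. apply proc_events_nil. intros [q e] Hin. simpl. intros ->.
  unfold appended_events in Hin. apply in_map_iff in Hin. destruct Hin as [[q r] [Hq Hin]].
  injection Hq as -> _. unfold filter_map in Hin. apply in_flat_map in Hin.
  destruct Hin as [g [Hg Hin]]. unfold appended_resp, pendingb in Hin.
  destruct excluded_middle_informative as [Hp|]; [|destruct Hin].
  destruct Hin as [Hin|[]]. injection Hin as <- _. exact (Hno g Hg Hp eq_refl).
Qed.

Lemma proc_events_appended_logged p x0 o0 :
  nth_error h x0 = Some (p, EInv o0) -> pending h x0 -> In x0 (map ent_id G) ->
  exists r, proc_events p appended_events = [EResp (RVal r)].
Proof.
  intros Hx0 Hp0 Hin. apply in_map_iff in Hin. destruct Hin as [g0 [Hid0 Hg0in]].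
  destruct (In_nth_error _ _ Hg0in) as [k0 Hk0].
  destruct (nth_error_split G k0 Hk0) as (G1 & G2 & HG & _).
  assert (Hnd : ~ In x0 (map ent_id G1 ++ map ent_id G2)).
  { apply (NoDup_remove_2 (map ent_id G1) (map ent_id G2) x0).
    rewrite <- Hid0, <- map_cons, <- map_app, <- HG. exact log_ids_NoDup. }
  assert (Hother : forall g pr, In g (G1 ++ G2) -> appended_resp g = Some pr -> fst pr <> p).
  { intros g pr Hg Hpr. unfold appended_resp, pendingb in Hpr.
    destruct excluded_middle_informative as [Hp|]; [|discriminate].
    injection Hpr as <-. simpl. intros Hown.
    destruct (pending_owner _ Hp) as [o Ho]. rewrite Hown in Ho.
    apply Hnd. rewrite <- map_app.
    rewrite (pending_unique h x0 (ent_id g) p o0 o h_wf Hx0 (proj2 Hp0) Ho (proj2 Hp)).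
    apply in_map. exact Hg. }
  assert (Hresp0 : appended_resp g0 = Some (p, ent_resp g0)).
  { unfold appended_resp, pendingb, owner. subst x0. rewrite Hx0.
    destruct excluded_middle_informative; [reflexivity|contradiction]. }
  assert (Hnil : forall Gi, (forall g, In g Gi -> In g (G1 ++ G2)) ->
    proc_events p (map resp_event (filter_map appended_resp Gi)) = []).
  { intros Gi HGi. apply proc_events_nil. intros [q e] Hq. simpl. intros ->.
    apply in_map_iff in Hq. destruct Hq as [[q r] [Hq Hin]]. injection Hq as -> _.
    apply in_flat_map in Hin. destruct Hin as [g [Hg Hin]].
    destruct (appended_resp g) as [pr|] eqn:Ha; [|destruct Hin].
    destruct Hin as [->|[]]. exact (Hother g _ (HGi g Hg) Ha eq_refl). }
  exists (ent_resp g0). unfold appended_events.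
  rewrite HG, filter_map_app, map_app, proc_events_app, (Hnil G1) by (intros; apply in_or_app; auto).
  unfold filter_map at 1. simpl flat_map. rewrite Hresp0. simpl. unfold resp_event at 1. simpl.
  rewrite proc_events_cons_self.
  fold (filter_map appended_resp G2). rewrite (Hnil G2) by (intros; apply in_or_app; auto).
  reflexivity.
Qed.

Lemma proc_events_kept_all p :
  (forall x o, nth_error h x = Some (p, EInv o) -> keep x = true) ->
  proc_events p (kept keep h 0) = proc_events p h.
Proof.
  intros Hinv. apply proc_events_kept. intros x [o|v] Hx; simpl.
  - exact (Hinv x o Hx).
  - exact (keep_resp x p v Hx).
Qed.

Lemma proc_events_kept_dropped p x0 o0 :
  nth_error h x0 = Some (p, EInv o0) -> pending h x0 -> keep x0 = false ->
  proc_events p (kept keep h 0) = proc_events p (firstn x0 h).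
Proof.
  intros Hx0 [_ Hnr0] Hk0.
  assert (Hl1 : length (firstn x0 h) = x0).
  { rewrite length_firstn. enough (x0 < length h) by lia. apply nth_error_Some. congruence. }
  rewrite <- (firstn_skipn_middle x0 h Hx0) at 1.
  rewrite kept_app, kept_cons, Hl1, Nat.add_0_l, Hk0, app_nil_l, proc_events_app.
  rewrite (proc_events_kept keep p (skipn (S x0) h)), proc_events_kept.
  - rewrite (proc_events_nil p (skipn (S x0) h)); [apply app_nil_r|].
    intros [q e] Hin Hq. simpl in Hq. subst q.
    destruct (In_nth_error _ _ Hin) as [z Hz]. rewrite nth_error_skipn in Hz.
    exact (pending_no_later_event h x0 p o0 h_wf Hx0 Hnr0 (S x0 + z) p e ltac:(lia) Hz eq_refl).
  - intros x e Hx. rewrite nth_error_firstn in Hx. destruct (Nat.ltb_spec x x0); [|discriminate].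
    simpl. destruct (keep x) eqn:Hkx; [reflexivity|exfalso].
    destruct (pending_of_dropped x Hkx) as [[q [o Hq]] Hnr]. rewrite Hx in Hq.
    injection Hq as <- ->.
    pose proof (pending_unique h x x0 p o o0 h_wf Hx Hnr Hx0 Hnr0). lia.
  - intros x e Hx. exfalso. rewrite nth_error_skipn in Hx.
    exact (pending_no_later_event h x0 p o0 h_wf Hx0 Hnr0 (S x0 + x) p e ltac:(lia) Hx eq_refl).
Qed.

Lemma completion_well_formed : well_formed completion.
Proof.
  intros p. change (alternating true (proc_events p completion)).
  unfold completion. rewrite proc_events_app.
  destruct (classic (exists x0 o0, nth_error h x0 = Some (p, EInv o0) /\ pending h x0))
    as [[x0 [o0 [Hx0 Hp0]]]|Hnone].
  - pose proof Hp0 as [_ Hnr0].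
    assert (Honly : forall x o, nth_error h x = Some (p, EInv o) -> keep x = false -> x = x0).
    { intros x o Hx Hkx. destruct (pending_of_dropped x Hkx) as [_ Hnr].
      exact (pending_unique h x x0 p o o0 h_wf Hx Hnr Hx0 Hnr0). }
    pose proof (h_wf p) as Hwf. change (alternating true (proc_events p h)) in Hwf.
    rewrite (proc_events_last h p x0 _ Hx0) in Hwf
      by exact (pending_no_later_event h x0 p o0 h_wf Hx0 Hnr0).
    destruct (keep x0) eqn:Hk0.
    + rewrite proc_events_kept_all.
      2:{ intros x o Hx. destruct (keep x) eqn:Hkx; [reflexivity|].
          rewrite (Honly x o Hx Hkx) in Hkx. congruence. }
      destruct (proc_events_appended_logged p x0 o0 Hx0 Hp0) as [r ->];
        [exact (logged_of_kept_pending x0 Hp0 Hk0)|].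
      rewrite (proc_events_last h p x0 _ Hx0), <- app_assoc
        by exact (pending_no_later_event h x0 p o0 h_wf Hx0 Hnr0).
      apply alternating_snoc_resp. exact Hwf.
    + rewrite (proc_events_kept_dropped p x0 o0 Hx0 Hp0 Hk0), proc_events_appended_nil, app_nil_r.
      * eapply alternating_prefix. exact Hwf.
      * intros g Hg Hpg Hown. destruct (pending_owner _ Hpg) as [o Ho]. rewrite Hown in Ho.
        pose proof (pending_unique h _ x0 p o o0 h_wf Ho (proj2 Hpg) Hx0 Hnr0) as Hid.
        rewrite <- Hid, keep_logged in Hk0 by exact Hg. discriminate.
  - rewrite proc_events_kept_all, proc_events_appended_nil, app_nil_r; [exact (h_wf p)| |].
    + intros g Hg Hpg Hown. destruct (pending_owner _ Hpg) as [o Ho]. rewrite Hown in Ho.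
      apply Hnone. eauto.
    + intros x o Hx. destruct (keep x) eqn:Hkx; [reflexivity|].
      exfalso. apply Hnone. exists x, o. split; [exact Hx|exact (pending_of_dropped x Hkx)].
Qed.

Lemma completion_is_completion : is_completion h completion.
Proof.
  exists keep, (filter_map appended_resp G).
  split; [intros i _ Hk; apply pending_of_dropped; exact Hk|].
  split; [reflexivity|]. split; [exact completion_well_formed|exact completion_complete].
Qed.

Lemma completion_linearizable : linearizable_conforming delta s0 completion.
Proof.
  set (L := map (fun g => pos (ent_id g)) G).
  assert (HnodupL : NoDup L).
  { apply NoDup_map_comp; [exact log_ids_NoDup|]. intros a b Ha Hb Hab.
    pose proof (keep_logged a Ha). pose proof (keep_logged b Hb).
    destruct (lt_eq_lt_dec (ent_id a) (ent_id b)) as [[Hl|Hl]|Hl]; auto.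
    - pose proof (pos_lt _ _ H Hl). lia.
    - pose proof (pos_lt _ _ H0 Hl). lia. }
  assert (HnthL : forall k g, nth_error G k = Some g -> nth k L 0 = pos (ent_id g)).
  { intros k g Hk. apply nth_error_nth. unfold L. rewrite nth_error_map, Hk. reflexivity. }
  assert (Hentry : forall k, k < length L -> exists g, nth_error G k = Some g).
  { intros k Hk. unfold L in Hk. rewrite length_map in Hk.
    destruct (nth_error G k) eqn:E; eauto. apply nth_error_None in E. lia. }
  exists L, (fun y => lin_point pos y G 0), (state_before G).
  split; [exact HnodupL|]. split; [|split; [|split; [reflexivity|]]].
  - intros y. split.
    + intros Hy. apply in_map_iff in Hy. destruct Hy as [g [<- Hg]].
      destruct (In_nth_error _ _ Hg) as [k Hk].
      destruct (completion_entry_resp k g Hk) as [j [p [o [_ [H1 _]]]]]. exists p, o. exact H1.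
    + intros Hy. destruct (completion_inv y Hy) as [k [g [Hk <-]]].
      apply (in_map (fun g => pos (ent_id g))). eapply nth_error_In; eauto.
  - intros k Hk. destruct (Hentry k) as [g Hg]; [lia|]. destruct (Hentry (S k)) as [g' Hg']; [lia|].
    rewrite (HnthL _ _ Hg), (HnthL _ _ Hg'), (lin_point_nth pos G HnodupL k 0 g Hg),
      (lin_point_nth pos G HnodupL (S k) 0 g' Hg').
    pose proof (qtime_le _ _ (pos_le _ _ (log_time_sorted k g g' Hg Hg'))).
    pose proof (Qinv_succ_decr k). rewrite !Nat.add_0_l. lra.
  - intros k Hk. destruct (Hentry k Hk) as [g Hg].
    destruct (completion_entry_resp k g Hg) as [j [p [o [Hr [Hinv [Hresp Hj]]]]]].
    destruct (log_entry_ok k g Hg) as [[p' [o' [Hi Hd]]] [Hlt _]].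
    assert (Hkg : keep (ent_id g) = true) by (apply keep_logged; eapply nth_error_In; eauto).
    rewrite nth_error_completion_kept, Hi in Hinv by (auto; apply nth_error_Some; congruence).
    injection Hinv as <- <-.
    exists j, p', o', (ent_resp g). rewrite (HnthL _ _ Hg). split; [exact Hr|].
    rewrite nth_error_completion_kept, (lin_point_nth pos G HnodupL k 0 g Hg)
      by (auto; apply nth_error_Some; congruence).
    split; [exact Hi|]. split; [exact Hresp|].
    pose proof (qtime_le _ _ (pos_lt _ _ Hkg Hlt)) as Hlow. rewrite qtime_succ in Hlow.
    pose proof (qtime_le _ _ Hj). pose proof (Qinv_succ_pos k). pose proof (Qinv_succ_le1 k).
    rewrite Nat.add_0_l. split; [|split]; [lra|lra|].
    simpl. rewrite Hg. exact Hd.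
Qed.

Lemma linearizable_of_log : exists h', is_completion h h' /\ linearizable_conforming delta s0 h'.
Proof.
  exists completion. split; [exact completion_is_completion|exact completion_linearizable].
Qed.

End Completion.

(** * The invariant of algorithm U *)

Definition log_ids (G : list entry) : list nat := map ent_id G.

(** Ghost state: the ticket [t] drawn at line 2 is mapped to the drawing process, its
    operation, and the history position of its invocation. *)
Definition ticket_table : Type := nat -> option (proc * OP * nat).

Implicit Types (h : list (proc * evt)) (c : config OP RES St) (G : list entry) (tix : ticket_table)
  (last_inv : proc -> nat).

(** In the algorithm's log, an entry is identified by the ticket of its operation. *)
Definition log_ok h tix G : Prop :=
  forall k t n s r, nth_error G k = Some (t, n, s, r) ->
    (exists q o i, tix t = Some (q, o, i) /\ i < n /\ delta (state_before G k) o s r) /\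
    n <= length h.

Definition logged_resp G t r := exists k n s, nth_error G k = Some (t, n, s, r).

Definition S_logged G tix (sv : sval RES St) :=
  sv = (0, s0, RBot, None) \/
  exists k t n s r q o i,
    nth_error G k = Some (t, n, s, r) /\ sv = (t, s, RVal r, Some q) /\ tix t = Some (q, o, i).

Definition A_announced tix (av : aval OP) :=
  av = (0, None, None) \/ exists ta o q i, av = (ta, Some o, Some q) /\ tix ta = Some (q, o, i).

(** The response recorded in the value [sv] of S has been copied into the H object
    it points to (line 6). *)
Definition resp_delivered (H : proc -> hval RES) (sv : sval RES St) : Prop :=
  deref H (snd sv) <> (fst (fst (fst sv)), RNull).

Definition pc_ticket (x : pcst OP RES St) : option nat :=
  match x with
  | Idle | At2 _ => None
  | At3 _ t | At4 _ t | At5 _ t | At6 _ t _ | At7 _ t _ | At8 _ t _ | At9 _ t _ _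
  | At12 _ t _ _ _ _ | At13 _ t _ _ | At14 _ t => Some t
  end.

(** Inside the while loop (lines 4-13) with ticket [t]. *)
Definition in_loop (x : pcst OP RES St) (t : nat) : Prop :=
  match x with
  | Idle | At2 _ | At3 _ _ | At14 _ _ => False
  | _ => pc_ticket x = Some t
  end.

Definition H_progress G c c' (p : proc) : Prop :=
  cH c' p = cH c p \/
  (snd (cH c p) = RNull /\
   exists r, logged_resp G (fst (cH c p)) r /\ cH c' p = (fst (cH c p), RVal r)).

Definition looping_ok h c tix last_inv G p o t :=
  latest_inv h p (last_inv p) o /\ tix t = Some (p, o, last_inv p) /\ fst (cH c p) = t /\
  (snd (cH c p) = RNull \/ exists r, logged_resp G t r /\ snd (cH c p) = RVal r).

Definition proc_inv h c tix last_inv G (p : proc) : Prop :=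
  match cpc c p with
  | Idle => snd (cH c p) <> RNull /\ forall l o, proc_events p h <> l ++ [EInv o]
  | At2 o => snd (cH c p) <> RNull /\ latest_inv h p (last_inv p) o
  | At3 o t =>
      snd (cH c p) <> RNull /\ latest_inv h p (last_inv p) o /\
      tix t = Some (p, o, last_inv p) /\ ~ In t (log_ids G)
  | At4 o t | At5 o t | At13 o t _ _ => looping_ok h c tix last_inv G p o t
  | At6 o t sv => looping_ok h c tix last_inv G p o t /\ S_logged G tix sv
  | At7 o t sv | At8 o t sv =>
      looping_ok h c tix last_inv G p o t /\ S_logged G tix sv /\
      (cS c = sv -> resp_delivered (cH c) sv)
  | At9 o t sv av =>
      looping_ok h c tix last_inv G p o t /\ S_logged G tix sv /\
      (cS c = sv -> resp_delivered (cH c) sv) /\ A_announced tix av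
  | At12 o t sv av s' r' =>
      looping_ok h c tix last_inv G p o t /\ S_logged G tix sv /\
      (cS c = sv -> resp_delivered (cH c) sv /\
        exists ta oa q i, av = (ta, Some oa, Some q) /\ tix ta = Some (q, oa, i) /\
          ~ In ta (log_ids G) /\ delta (state_before G (length G)) oa s' r' /\
          cH c q = (ta, RNull) /\ in_loop (cpc c q) ta)
  | At14 o t =>
      latest_inv h p (last_inv p) o /\ tix t = Some (p, o, last_inv p) /\
      exists r, logged_resp G t r /\ cH c p = (t, RVal r)
  end.

Record U_inv h c tix last_inv G : Prop := {
  inv_C_pos : 1 <= cC c;
  inv_tix_valid : forall t q o i, tix t = Some (q, o, i) ->
    1 <= t < cC c /\ nth_error h i = Some (q, EInv o);
  inv_tix_inj : forall t t' q q' o o' i,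
    tix t = Some (q, o, i) -> tix t' = Some (q', o', i) -> t = t';
  inv_tix_owner : forall t q o i, tix t = Some (q, o, i) -> last_inv q = i ->
    cpc c q = Idle \/ pc_ticket (cpc c q) = Some t;
  inv_A : A_announced tix (cA c);
  inv_S : (G = [] /\ cS c = (0, s0, RBot, None)) \/
    exists k t n s r q o i, S k = length G /\ nth_error G k = Some (t, n, s, r) /\
      cS c = (t, s, RVal r, Some q) /\ tix t = Some (q, o, i);
  inv_log : log_ok h tix G;
  inv_log_NoDup : NoDup (log_ids G);
  inv_log_sorted : time_sorted G;
  inv_null_last : forall q t, in_loop (cpc c q) t -> cH c q = (t, RNull) ->
    forall k n s r, nth_error G k = Some (t, n, s, r) -> S k = length G;
  inv_wf : forall p, alternating true (proc_events p h);
  inv_resp : forall i j, resp_of h i j ->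
    exists k t n s r q o p, nth_error G k = Some (t, n, s, r) /\
      tix t = Some (q, o, i) /\ n <= j /\ nth_error h j = Some (p, EResp (RVal r));
  inv_proc : forall p, proc_inv h c tix last_inv G p
}.

Lemma U_inv_init : U_inv [] (init_config OP RES s0) (fun _ => None) (fun _ => 0) [].
Proof.
  constructor; cbn.
  - lia.
  - intros; discriminate.
  - intros; discriminate.
  - intros; discriminate.
  - left. reflexivity.
  - left. auto.
  - intros k t n s r H. destruct k; discriminate.
  - constructor.
  - intros k g g' H. destruct k; discriminate.
  - intros q t Hw Hh k. destruct k; discriminate.
  - intros p. constructor.
  - intros i j [_ [p [o [v [H _]]]]]. destruct i; discriminate.
  - intros p. unfold proc_inv. cbn. split; [discriminate|]. intros l o Hl.
    destruct l; discriminate.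
Qed.

Lemma state_before_snoc G g k : k <= length G -> state_before (G ++ [g]) k = state_before G k.
Proof. intros Hk. destruct k; [reflexivity|]. simpl. rewrite nth_error_app1 by lia. reflexivity. Qed.

Lemma log_ok_history_snoc h x tix G : log_ok h tix G -> log_ok (h ++ [x]) tix G.
Proof.
  intros Hlog k t n s r Hk. destruct (Hlog k t n s r Hk) as [Hent Hn].
  split; [exact Hent|]. rewrite length_app. lia.
Qed.

Lemma log_ok_snoc h tix G ta q o i s' r' : log_ok h tix G ->
  tix ta = Some (q, o, i) -> i < length h -> delta (state_before G (length G)) o s' r' ->
  log_ok h tix (G ++ [(ta, length h, s', r')]).
Proof.
  intros Hlog Hta Hi Hd k t n s r Hk. apply nth_error_snoc_inv in Hk.
  destruct Hk as [[Hkl Hk]|[-> Hk]].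
  - destruct (Hlog k t n s r Hk) as [[q' [o' [i' [H1 [H2 H3]]]]] H4]. split; [|exact H4].
    exists q', o', i'. rewrite state_before_snoc by lia. auto.
  - injection Hk as -> -> -> ->. split; [|lia].
    exists q, o, i. rewrite state_before_snoc by lia. auto.
Qed.

Lemma time_sorted_snoc h tix G ta s' r' : log_ok h tix G -> time_sorted G ->
  time_sorted (G ++ [(ta, length h, s', r')]).
Proof.
  intros Hlog Hsorted k x y Hx Hy. apply nth_error_snoc_inv in Hx. apply nth_error_snoc_inv in Hy.
  destruct Hx as [[Hkl Hx]|[Hkl Hx]]; destruct Hy as [[Hkl' Hy]|[Hkl' ->]]; try lia.
  - exact (Hsorted k x y Hx Hy).
  - destruct x as [[[t1 n1] s1] r1]. exact (proj2 (Hlog k _ _ _ _ Hx)).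
Qed.

Lemma S_logged_mono G G' tix tix' sv : S_logged G tix sv ->
  (forall t x, tix t = Some x -> tix' t = Some x) ->
  (forall k g, nth_error G k = Some g -> nth_error G' k = Some g) -> S_logged G' tix' sv.
Proof.
  intros [H|[k [t [n [s [r [q [o [i [H1 [H2 H3]]]]]]]]]]] HT HG; [left; auto|].
  right. exists k, t, n, s, r, q, o, i. auto.
Qed.

Lemma A_announced_mono tix tix' av : A_announced tix av ->
  (forall t x, tix t = Some x -> tix' t = Some x) -> A_announced tix' av.
Proof. intros [H|[ta [o [q [i [H1 H2]]]]]] HT; [left; auto|right]. exists ta, o, q, i. auto. Qed.

Lemma logged_resp_mono G G' t r : logged_resp G t r ->
  (forall k g, nth_error G k = Some g -> nth_error G' k = Some g) -> logged_resp G' t r.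
Proof. intros [k [n [s H]]] HG. exists k, n, s. auto. Qed.

Lemma in_log_ids G t : In t (log_ids G) <-> exists k n s r, nth_error G k = Some (t, n, s, r).
Proof.
  unfold log_ids. split.
  - intros H. apply in_map_iff in H. destruct H as [[[[t' n] s] r] [H1 H2]]. unfold ent_id in H1.
    simpl in H1. subst.
    destruct (In_nth_error _ _ H2) as [k Hk]. exists k, n, s, r. auto.
  - intros [k [n [s [r H]]]]. apply in_map_iff. exists (t, n, s, r). split; auto.
    eapply nth_error_In; eauto.
Qed.

Lemma S_logged_time G tix sv : S_logged G tix sv ->
  fst (fst (fst sv)) = 0 \/ In (fst (fst (fst sv))) (log_ids G).
Proof.
  intros [->|[k [t [n [s [r [q [o [i [H1 [H2 H3]]]]]]]]]]]; [left; reflexivity|right].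
  subst. simpl. apply in_log_ids. eauto.
Qed.

Lemma proc_inv_frame h h' c c' tix tix' last_inv last_inv' G G' q :
  proc_inv h c tix last_inv G q ->
  cpc c' q = cpc c q -> last_inv' q = last_inv q ->
  (forall t x, tix t = Some x -> tix' t = Some x) ->
  (forall k g, nth_error G k = Some g -> nth_error G' k = Some g) ->
  (forall i o, latest_inv h q i o -> latest_inv h' q i o) ->
  proc_events q h' = proc_events q h ->
  H_progress G' c c' q ->
  (forall o t, cpc c q = At3 o t -> ~ In t (log_ids G) -> ~ In t (log_ids G')) ->
  (forall sv, S_logged G tix sv -> cS c' = sv ->
     cS c = sv /\ G' = G /\ (resp_delivered (cH c) sv -> resp_delivered (cH c') sv) /\
     (forall q' ta o i, tix ta = Some (q', o, i) -> ~ In ta (log_ids G) ->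
        cH c q' = (ta, RNull) -> in_loop (cpc c q') ta ->
        cH c' q' = (ta, RNull) /\ in_loop (cpc c' q') ta)) ->
  proc_inv h' c' tix' last_inv' G' q.
Proof.
  intros HP Hpc HPI HTI HG Hcur Hproj HH H3 HS.
  assert (Hw : forall o t, looping_ok h c tix last_inv G q o t ->
      looping_ok h' c' tix' last_inv' G' q o t).
  { intros o t [W1 [W2 [W3 W4]]]. rewrite <- HPI in W1, W2. split; [auto|]. split; [auto|].
    destruct HH as [HH|[HH1 [r [HH2 HH3]]]].
    - rewrite HH. split; auto. destruct W4 as [W4|[r [W5 W6]]]; [left; auto|right].
      exists r. split; auto. eapply logged_resp_mono; eauto.
    - rewrite HH3. simpl. split; auto. right. exists r. split; auto. congruence. }
  assert (Hnr : snd (cH c q) <> RNull -> snd (cH c' q) <> RNull).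
  { intros Hn. destruct HH as [HH|[HH1 _]]; [rewrite HH; auto|contradiction]. }
  unfold proc_inv in *. rewrite Hpc. destruct (cpc c q) eqn:Epc.
  - destruct HP as [HP1 HP2]. split; auto. rewrite Hproj. auto.
  - destruct HP as [HP1 HP2]. split; auto. rewrite HPI. auto.
  - destruct HP as [HP1 [HP2 [HP3 HP4]]]. split; auto. rewrite HPI. split; auto. split; auto.
    eapply H3; eauto.
  - auto.
  - auto.
  - destruct HP as [HP1 HP2]. split; auto. eapply S_logged_mono; eauto.
  - destruct HP as [HP1 [HP2 HP3]]. split; auto. split; [eapply S_logged_mono; eauto|].
    intros E. destruct (HS _ HP2 E) as [E1 [_ [E3 _]]]. auto.
  - destruct HP as [HP1 [HP2 HP3]]. split; auto. split; [eapply S_logged_mono; eauto|].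
    intros E. destruct (HS _ HP2 E) as [E1 [_ [E3 _]]]. auto.
  - destruct HP as [HP1 [HP2 [HP3 HP4]]]. split; auto. split; [eapply S_logged_mono; eauto|].
    split; [|eapply A_announced_mono; eauto].
    intros E. destruct (HS _ HP2 E) as [E1 [_ [E3 _]]]. auto.
  - destruct HP as [HP1 [HP2 HP3]]. split; auto. split; [eapply S_logged_mono; eauto|].
    intros E. destruct (HS _ HP2 E) as [E1 [E2 [E3 E4]]]. subst G'.
    destruct (HP3 E1) as [K1 [ta [oa [q' [i [K2 [K3 [K4 [K5 [K6 K7]]]]]]]]]].
    split; auto. exists ta, oa, q', i. split; auto. split; auto. split; auto. split; auto.
    eapply E4; eauto.
  - auto.
  - destruct HP as [HP1 [HP2 [r [HP3 HP4]]]]. rewrite HPI. split; auto. split; auto.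
    exists r. split; [eapply logged_resp_mono; eauto|].
    destruct HH as [HH|[HH1 _]]; [rewrite HH; auto|]. rewrite HP4 in HH1. discriminate.
Qed.

Lemma proc_inv_frame_pc h h' c c' tix tix' last_inv last_inv' G p x q :
  proc_inv h c tix last_inv G q -> q <> p ->
  cS c' = cS c -> cH c' = cH c -> cpc c' = upd (cpc c) p x ->
  (forall t, in_loop (cpc c p) t -> cH c p = (t, RNull) -> in_loop x t) ->
  last_inv' q = last_inv q ->
  (forall t y, tix t = Some y -> tix' t = Some y) ->
  (forall i o, latest_inv h q i o -> latest_inv h' q i o) ->
  proc_events q h' = proc_events q h ->
  proc_inv h' c' tix' last_inv' G q.
Proof.
  intros HP Hqp ES EH Epc Hloop HPI HTI Hlatest Hproj.
  apply (proc_inv_frame h h' c c' tix tix' last_inv last_inv' G G q); auto.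
  - rewrite Epc. apply upd_neq. exact Hqp.
  - left. rewrite EH. reflexivity.
  - intros sv _ ES'. rewrite ES in ES'. rewrite EH, Epc. split; [exact ES'|]. split; [reflexivity|].
    split; [auto|]. intros q' ta o i _ _ Hh Hw. split; [exact Hh|].
    destruct (Nat.eq_dec q' p) as [->|Hq'].
    + rewrite upd_eq. auto.
    + rewrite upd_neq; auto.
Qed.

Lemma proc_inv_null h c tix last_inv G q : proc_inv h c tix last_inv G q -> snd (cH c q) = RNull ->
  exists o, in_loop (cpc c q) (fst (cH c q)) /\ tix (fst (cH c q)) = Some (q, o, last_inv q).
Proof.
  unfold proc_inv. intros HP Hn. destruct (cpc c q) eqn:E; simpl;
  try (destruct HP as [HP _]; contradiction);
  try (destruct HP as [[_ [W2 [W3 _]]] _]; exists o; rewrite W3; split; auto; fail);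
  try (destruct HP as [_ [W2 [W3 _]]]; exists o; rewrite W3; split; auto; fail).
  destruct HP as [_ [_ [r [_ HP]]]]. rewrite HP in Hn. discriminate.
Qed.

Lemma tix_fun tix t q o i q' o' i' : tix t = Some (q, o, i) -> tix t = Some (q', o', i') ->
    q = q' /\ o = o' /\ i = i'.
Proof. intros H1 H2. rewrite H1 in H2. inversion H2. auto. Qed.

(* Here [inv_null_last] pays off: a logged operation still waiting with a NULL
   response can only be the one installed in S, whose response is delivered. *)
Lemma inv_null_unlogged h c tix last_inv G q t : U_inv h c tix last_inv G ->
  resp_delivered (cH c) (cS c) -> cH c q = (t, RNull) ->
  ~ In t (log_ids G) /\ in_loop (cpc c q) t /\ exists o, tix t = Some (q, o, last_inv q).
Proof.
  intros HI Hn Hq.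
  destruct (proc_inv_null _ _ _ _ _ _ (inv_proc _ _ _ _ _ HI q)) as [o [Hw Ht]];
    [rewrite Hq; reflexivity|].
  rewrite Hq in Hw, Ht. simpl in Hw, Ht. split; [|eauto].
  intros Hin. apply in_log_ids in Hin. destruct Hin as [k [n [s [r Hk]]]].
  pose proof (inv_null_last _ _ _ _ _ HI q t Hw Hq k n s r Hk) as Hlast.
  destruct (inv_S _ _ _ _ _ HI) as [[-> _]|[k' [t' [n' [s' [r' [q' [o' [i' [E1 [E2 [E3 E4]]]]]]]]]]]].
  - destruct k; discriminate.
  - assert (k' = k) by lia. subst k'. rewrite Hk in E2. injection E2 as <- <- <- <-.
    rewrite Ht in E4. injection E4 as <- _ _.
    unfold resp_delivered in Hn. rewrite E3 in Hn. apply Hn. simpl. exact Hq.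
Qed.

Lemma inv_S_state h c tix last_inv G : U_inv h c tix last_inv G ->
    snd (fst (fst (cS c))) = state_before G (length G).
Proof.
  intros HI.
  destruct (inv_S _ _ _ _ _ HI) as [[HG HS]|[k [t [n [s [r [q [o [i [E1 [E2 [E3 E4]]]]]]]]]]]].
  - subst G. rewrite HS. reflexivity.
  - rewrite E3, <- E1. simpl. rewrite E2. reflexivity.
Qed.

Lemma inv_S_logged h c tix last_inv G : U_inv h c tix last_inv G -> S_logged G tix (cS c).
Proof.
  intros HI.
  destruct (inv_S _ _ _ _ _ HI) as [[HG HS]|[k [t [n [s [r [q [o [i [E1 [E2 [E3 E4]]]]]]]]]]]].
  - left. auto.
  - right. exists k, t, n, s, r, q, o, i. auto.
Qed.

Lemma S_logged_fresh G tix sv ta s r q : S_logged G tix sv -> ~ In ta (log_ids G) -> 1 <= ta ->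
    sv <> (ta, s, r, q).
Proof.
  intros HH Hn Ht E. destruct (S_logged_time _ _ _ HH) as [H|H]; subst sv; simpl in H; [lia|auto].
Qed.

Lemma log_ids_snoc G g : log_ids (G ++ [g]) = log_ids G ++ [ent_id g].
Proof. unfold log_ids. rewrite map_app. reflexivity. Qed.

Lemma inv_local_A h c tix last_inv G p x a :
  U_inv h c tix last_inv G ->
  A_announced tix a ->
  proc_inv h (Config (cC c) a (cS c) (cH c) (upd (cpc c) p x)) tix last_inv G p ->
  cpc c p <> Idle ->
  pc_ticket x = pc_ticket (cpc c p) ->
  (forall t, in_loop (cpc c p) t -> cH c p = (t, RNull) -> in_loop x t) ->
  (forall t, in_loop x t -> in_loop (cpc c p) t) ->
  U_inv h (Config (cC c) a (cS c) (cH c) (upd (cpc c) p x)) tix last_inv G.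
Proof.
  intros HI HA HP HnI Hpt Hw1 Hw2.
  destruct HI; constructor; cbn [cpc cH cS cA cC]; auto.
  - intros t q o i Ht Hi. destruct (Nat.eq_dec q p) as [->|Hq].
    + rewrite upd_eq. right. destruct (inv_tix_owner0 t p o i Ht Hi) as [E|E]; [contradiction|].
      congruence.
    + rewrite upd_neq by auto. eauto.
  - intros q t Hw Hh. destruct (Nat.eq_dec q p) as [->|Hq].
    + rewrite upd_eq in Hw. eapply inv_null_last0; eauto.
    + rewrite upd_neq in Hw by auto. eapply inv_null_last0; eauto.
  - intros q. destruct (Nat.eq_dec q p) as [->|Hq]; auto.
    apply (proc_inv_frame_pc h h c _ tix tix last_inv last_inv G p x q); auto.
Qed.

Lemma inv_local h c tix last_inv G p x :
  U_inv h c tix last_inv G ->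
  proc_inv h (set_pc c p x) tix last_inv G p ->
  cpc c p <> Idle ->
  pc_ticket x = pc_ticket (cpc c p) ->
  (forall t, in_loop (cpc c p) t -> cH c p = (t, RNull) -> in_loop x t) ->
  (forall t, in_loop x t -> in_loop (cpc c p) t) ->
  U_inv h (set_pc c p x) tix last_inv G.
Proof. intros HI; intros. apply inv_local_A; auto. apply (inv_A _ _ _ _ _ HI). Qed.

Ltac proc_inv_of HI p E HP :=
  pose proof (inv_proc _ _ _ _ _ HI p) as HP; unfold proc_inv in HP; rewrite E in HP.

Ltac proc_inv_self := unfold proc_inv, set_pc; cbn [cpc cH cS cA cC]; rewrite upd_eq.

Ltac local_step E :=
  apply inv_local; auto; rewrite ?E; try discriminate; try reflexivity;
  [|simpl; auto|simpl; auto]; proc_inv_self.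

Definition tix_add tix (t : nat) (x : proc * OP * nat) : ticket_table :=
  fun t' => if Nat.eqb t' t then Some x else tix t'.

Lemma tix_add_extends tix t x : (forall t' x', tix t' = Some x' -> t' < t) ->
  forall t' x', tix t' = Some x' -> tix_add tix t x t' = Some x'.
Proof.
  intros Hlt t' x' Ht'. unfold tix_add. destruct (Nat.eqb_spec t' t); [|exact Ht'].
  specialize (Hlt _ _ Ht'). lia.
Qed.

Lemma tix_add_cases tix t x t' x' : tix_add tix t x t' = Some x' ->
  (t' = t /\ x' = x) \/ (t' <> t /\ tix t' = Some x').
Proof. unfold tix_add. destruct (Nat.eqb_spec t' t); [left|right]; split; auto; congruence. Qed.

Lemma log_ok_tix_mono h tix tix' G : (forall t x, tix t = Some x -> tix' t = Some x) ->
  log_ok h tix G -> log_ok h tix' G.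
Proof.
  intros Htix Hlog k t n s r Hk. destruct (Hlog k t n s r Hk) as [[q [o [i [H1 H2]]]] H3].
  split; [|exact H3]. exists q, o, i. auto.
Qed.

Lemma looping_ok_H h c c' tix last_inv G p o t : looping_ok h c tix last_inv G p o t ->
  H_progress G c c' p ->
  looping_ok h c' tix last_inv G p o t.
Proof.
  intros [W1 [W2 [W3 W4]]] [HH|[HH1 [r [HH2 HH3]]]].
  - unfold looping_ok. rewrite HH. auto.
  - unfold looping_ok. rewrite HH3. simpl. split; auto. split; auto. split; auto. right. exists r.
    split; auto. congruence.
Qed.

Lemma looping_ok_log h c tix last_inv G G' p o t : looping_ok h c tix last_inv G p o t ->
  (forall k g, nth_error G k = Some g -> nth_error G' k = Some g) ->
      looping_ok h c tix last_inv G' p o t.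
Proof.
  intros [W1 [W2 [W3 W4]]] HG. split; auto. split; auto. split; auto.
  destruct W4 as [W4|[r [W5 W6]]]; [left; auto|right]. exists r. split; auto.
  eapply logged_resp_mono; eauto.
Qed.

Lemma inv_line1 h c tix last_inv G p o : U_inv h c tix last_inv G -> cpc c p = Idle ->
  U_inv (h ++ [(p, EInv o)]) (set_pc c p (At2 o)) tix (upd last_inv p (length h)) G.
Proof.
  intros HI E. proc_inv_of HI p E HP.
  destruct HP as [HP1 HP2].
  assert (Hnth : forall i x, nth_error h i = Some x -> nth_error (h ++ [(p, EInv o)]) i = Some x).
  { intros i x Hx. rewrite nth_error_app1; auto. apply nth_error_Some. congruence. }
  destruct HI; constructor; unfold set_pc; cbn [cpc cH cS cA cC]; auto.
  - intros t q o' i Ht. destruct (inv_tix_valid0 t q o' i Ht). auto.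
  - intros t q o' i Ht Hi. destruct (Nat.eq_dec q p) as [->|Hq].
    + rewrite upd_eq in Hi. destruct (inv_tix_valid0 t p o' i Ht) as [_ Hn].
      assert (i < length h) by (apply nth_error_Some; congruence). lia.
    + rewrite upd_neq in Hi by auto. rewrite upd_neq by auto. eauto.
  - apply log_ok_history_snoc. exact inv_log0.
  - intros q t Hw Hh. destruct (Nat.eq_dec q p) as [->|Hq].
    + rewrite upd_eq in Hw. destruct Hw.
    + rewrite upd_neq in Hw by auto. eapply inv_null_last0; eauto.
  - intros q. destruct (Nat.eq_dec q p) as [->|Hq].
    + rewrite proc_events_snoc_self. apply alternating_snoc_inv; auto.
    + rewrite proc_events_snoc_other; auto.
  - intros i j Hr. pose proof (resp_of_lt _ _ _ Hr) as Hj. rewrite length_app in Hj. simpl in Hj.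
    destruct (Nat.eq_dec j (length h)) as [->|Hj'].
    + exfalso. destruct Hr as [_ [p' [o' [v [_ [H2 _]]]]]]. rewrite nth_error_snoc_last in H2.
      discriminate.
    + destruct (inv_resp0 i j) as [k [t [n [s [r [q [o' [p' [H1 [H2 [H3 H4]]]]]]]]]]].
      * apply (resp_of_snoc _ _ _ _ Hr). lia.
      * exists k, t, n, s, r, q, o', p'. repeat split; auto.
  - intros q. destruct (Nat.eq_dec q p) as [->|Hq].
    + proc_inv_self. split; auto. rewrite upd_eq. split; [apply nth_error_snoc_last|].
      intros x q' e Hx Hxe. exfalso.
      assert (x < length (h ++ [(p, EInv o)])) by (apply nth_error_Some; congruence).
      rewrite length_app in H. simpl in H. lia.
    + apply (proc_inv_frame_pc h _ c _ tix tix last_inv _ G p (At2 o) q); auto.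
      * rewrite E. intros _ [].
      * apply upd_neq; auto.
      * intros i o' Hc. apply latest_inv_snoc; auto.
      * apply proc_events_snoc_other; auto.
Qed.

Lemma inv_line2 h c tix last_inv G p o : U_inv h c tix last_inv G -> cpc c p = At2 o ->
  U_inv h (Config (S (cC c)) (cA c) (cS c) (cH c) (upd (cpc c) p (At3 o (cC c))))
      (tix_add tix (cC c) (p, o, last_inv p)) last_inv G.
Proof.
  intros HI E. proc_inv_of HI p E HP.
  destruct HP as [HP1 HP2].
  assert (HTI : forall t x, tix t = Some x -> tix_add tix (cC c) (p, o, last_inv p) t = Some x).
  { apply tix_add_extends. intros t [[q o'] i] Ht. apply (inv_tix_valid _ _ _ _ _ HI t q o' i Ht). }
  assert (Hfresh : forall t q o' i, tix t = Some (q, o', i) -> i = last_inv p -> False).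
  { intros t q o' i Ht Hi. destruct (inv_tix_valid _ _ _ _ _ HI t q o' i Ht) as [_ Hn]. subst i.
    destruct HP2 as [Hc _]. rewrite Hc in Hn. injection Hn as <- _.
    destruct (inv_tix_owner _ _ _ _ _ HI t p o' (last_inv p) Ht eq_refl) as [E'|E'];
      rewrite E in E'; discriminate. }
  destruct HI; constructor; cbn [cpc cH cS cA cC]; auto.
  - intros t q o' i Ht. apply tix_add_cases in Ht. destruct Ht as [[-> Hx]|[Hne Ht]].
    + injection Hx as -> -> ->. split; [lia|]. apply HP2.
    + destruct (inv_tix_valid0 t q o' i Ht). split; auto. lia.
  - intros t t' q q' o1 o2 i H1 H2. apply tix_add_cases in H1. apply tix_add_cases in H2.
    destruct H1 as [[-> Hx]|[Hne H1]]; destruct H2 as [[-> Hx']|[Hne' H2]]; auto.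
    + injection Hx as -> -> ->. exfalso. eapply Hfresh; eauto.
    + injection Hx' as -> -> ->. exfalso. eapply Hfresh; eauto.
    + eauto.
  - intros t q o' i Ht Hi. apply tix_add_cases in Ht. destruct Ht as [[-> Hx]|[Hne Ht]].
    + injection Hx as -> -> ->. rewrite upd_eq. right. reflexivity.
    + destruct (Nat.eq_dec q p) as [->|Hq].
      * exfalso. eapply Hfresh; eauto.
      * rewrite upd_neq by auto. eauto.
  - eapply A_announced_mono; eauto.
  - destruct inv_S0 as [HS|[k [t [n [s [r [q [o' [i [H1 [H2 [H3 H4]]]]]]]]]]]]; [left; auto|right].
    exists k, t, n, s, r, q, o', i. auto.
  - eapply log_ok_tix_mono; eauto.
  - intros q t Hw Hh. destruct (Nat.eq_dec q p) as [->|Hq].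
    + rewrite upd_eq in Hw. destruct Hw.
    + rewrite upd_neq in Hw by auto. eapply inv_null_last0; eauto.
  - intros i j Hr.
    destruct (inv_resp0 i j Hr) as [k [t [n [s [r [q [o' [p' [H1 [H2 [H3 H4]]]]]]]]]]].
    exists k, t, n, s, r, q, o', p'. auto.
  - intros q. destruct (Nat.eq_dec q p) as [->|Hq].
    + proc_inv_self. split; auto. split; auto.
      split; [unfold tix_add; rewrite Nat.eqb_refl; reflexivity|]. intros Hin.
      apply in_log_ids in Hin.
      destruct Hin as [k [n [s [r Hk]]]].
      destruct (inv_log0 k _ _ _ _ Hk) as [[q [o' [i [H1 _]]]] _].
      destruct (inv_tix_valid0 _ _ _ _ H1). lia.
    + apply (proc_inv_frame_pc h h c _ tix _ last_inv last_inv G p (At3 o (cC c)) q); auto.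
      rewrite E. intros _ [].
Qed.

Lemma inv_line3 h c tix last_inv G p o t : U_inv h c tix last_inv G -> cpc c p = At3 o t ->
  U_inv h (Config (cC c) (cA c) (cS c) (upd (cH c) p (t, RNull)) (upd (cpc c) p (At4 o t)))
    tix last_inv G.
Proof.
  intros HI E. proc_inv_of HI p E HP.
  destruct HP as [HP1 [HP2 [HP3 HP4]]].
  assert (Ht1 : 1 <= t) by (destruct (inv_tix_valid _ _ _ _ _ HI _ _ _ _ HP3) as [A _]; lia).
  destruct HI; constructor; cbn [cpc cH cS cA cC]; auto.
  - intros t' q o' i Ht Hi. destruct (Nat.eq_dec q p) as [->|Hq].
    + rewrite upd_eq. right.
      destruct (inv_tix_owner0 t' p o' i Ht Hi) as [E'|E']; rewrite E in E'; [discriminate|exact E'].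
    + rewrite upd_neq by auto. eauto.
  - intros q t' Hw Hh k n s r Hk. destruct (Nat.eq_dec q p) as [->|Hq].
    + rewrite upd_eq in Hw; rewrite upd_eq in Hh. inversion Hh; subst t'. exfalso. apply HP4.
      apply in_log_ids. eauto.
    + rewrite upd_neq in Hw by auto; rewrite upd_neq in Hh by auto. eapply inv_null_last0; eauto.
  - intros q. destruct (Nat.eq_dec q p) as [->|Hq].
    + proc_inv_self. unfold looping_ok. cbn [cH]. rewrite upd_eq. split; auto.
    + apply (proc_inv_frame h h c _ tix tix last_inv last_inv G G q); auto.
      * cbn [cpc]. apply upd_neq; auto.
      * left. cbn [cH]. apply upd_neq; auto.
      * intros sv Hsv ES. cbn [cS] in ES. split; auto. split; auto. split.
        -- unfold resp_delivered. cbn [cH]. destruct sv as [[[ts ss] rs] qs]. simpl.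
           destruct qs as [q'|]; simpl; auto. destruct (Nat.eq_dec q' p) as [->|Hq'].
           ++ rewrite upd_eq. intros _ Heq. inversion Heq; subst.
              destruct (S_logged_time _ _ _ Hsv) as [H0|H0]; simpl in H0; [lia|contradiction].
           ++ rewrite upd_neq; auto.
        -- intros q' ta o' i _ _ Hh Hw. cbn [cpc cH]. destruct (Nat.eq_dec q' p) as [->|Hq'].
           ++ rewrite E in Hw. destruct Hw.
           ++ rewrite !upd_neq; auto.
Qed.

Lemma inv_line4_loop h c tix last_inv G p o t : U_inv h c tix last_inv G -> cpc c p = At4 o t ->
    U_inv h (set_pc c p (At5 o t)) tix last_inv G.
Proof.
  intros HI E. proc_inv_of HI p E HP.
  apply inv_local; auto; rewrite ?E; try discriminate; try reflexivity;
    [proc_inv_self; exact HP| |]; simpl; auto.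
Qed.

Lemma inv_line4_exit h c tix last_inv G p o t : U_inv h c tix last_inv G -> cpc c p = At4 o t ->
    cH c p <> (t, RNull) -> U_inv h (set_pc c p (At14 o t)) tix last_inv G.
Proof.
  intros HI E Hn. proc_inv_of HI p E HP.
  destruct HP as [W1 [W2 [W3 W4]]].
  apply inv_local; auto; rewrite ?E; try discriminate; try reflexivity.
  - proc_inv_self. split; auto. split; auto. destruct W4 as [W4|[r [W5 W6]]].
    + exfalso. apply Hn. rewrite <- W3, <- W4. destruct (cH c p); reflexivity.
    + exists r. split; auto. rewrite <- W3, <- W6. destruct (cH c p); reflexivity.
  - simpl. intros t' Ht' Hh. inversion Ht'; subst. contradiction.
  - simpl. tauto.
Qed.

Lemma inv_line5 h c tix last_inv G p o t : U_inv h c tix last_inv G -> cpc c p = At5 o t ->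
    U_inv h (set_pc c p (At6 o t (cS c))) tix last_inv G.
Proof.
  intros HI E. proc_inv_of HI p E HP.
  local_step E. split; [exact HP|]. eapply inv_S_logged; eauto.
Qed.

Lemma inv_line6_succ h c tix last_inv G p o t ts ss rs q : U_inv h c tix last_inv G ->
    cpc c p = At6 o t (ts, ss, rs, Some q) ->
  cH c q = (ts, RNull) ->
  U_inv h (Config (cC c) (cA c) (cS c) (upd (cH c) q (ts, rs))
             (upd (cpc c) p (At7 o t (ts, ss, rs, Some q)))) tix last_inv G.
Proof.
  intros HI E Hq. proc_inv_of HI p E HP.
  destruct HP as [HP1 HP2].
  destruct HP2 as [HP2|[k [t' [n [s [r [q' [o' [i [H1 [H2 H3]]]]]]]]]]]; [discriminate|].
  inversion H2; subst t' s rs q'.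
  assert (Happr : logged_resp G ts r) by (exists k, n, ss; auto).
  assert (HinG : In ts (log_ids G)) by (apply in_log_ids; eauto).
  set (c' := Config (cC c) (cA c) (cS c) (upd (cH c) q (ts, RVal r))
                    (upd (cpc c) p (At7 o t (ts, ss, RVal r, Some q)))).
  assert (HH : forall q'', H_progress G c c' q'').
  { intros q''. unfold H_progress, c'. cbn [cH]. destruct (Nat.eq_dec q'' q) as [->|Hne].
    - right. rewrite upd_eq, Hq. simpl. split; auto. exists r. auto.
    - left. apply upd_neq; auto. }
  assert (Hdelivered : forall sv, resp_delivered (cH c) sv -> resp_delivered (cH c') sv).
  { intros [[[ts' ss'] rs'] qs] Hn. unfold resp_delivered in *. simpl in *.
    destruct qs as [q''|]; simpl in *; auto.
    unfold c'. cbn [cH]. destruct (Nat.eq_dec q'' q) as [->|Hne].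
    - rewrite upd_eq. discriminate.
    - rewrite upd_neq; auto. }
  fold c'. pose proof HI as HI0. destruct HI; constructor; unfold c'; cbn [cpc cH cS cA cC]; auto.
  - intros t' q' o2 i' Ht Hi. destruct (Nat.eq_dec q' p) as [->|Hq'].
    + rewrite upd_eq. right.
      destruct (inv_tix_owner0 t' p o2 i' Ht Hi) as [E'|E']; rewrite E in E'; [discriminate|exact E'].
    + rewrite upd_neq by auto. eauto.
  - intros q' t' Hw Hh. destruct (Nat.eq_dec q' q) as [->|Hne].
    + rewrite upd_eq in Hh. discriminate.
    + rewrite upd_neq in Hh by auto. destruct (Nat.eq_dec q' p) as [->|Hq'].
      * rewrite upd_eq in Hw. eapply inv_null_last0; eauto. rewrite E. exact Hw.
      * rewrite upd_neq in Hw by auto. eapply inv_null_last0; eauto.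
  - intros q''. destruct (Nat.eq_dec q'' p) as [->|Hq''].
    + proc_inv_self. split; [apply (looping_ok_H h c c' tix last_inv G p o t HP1 (HH p))|]. split.
      * right. exists k, ts, n, ss, r, q, o', i. auto.
      * intros _. unfold resp_delivered. simpl. rewrite upd_eq. discriminate.
    + apply (proc_inv_frame h h c c' tix tix last_inv last_inv G G q''); auto.
      * unfold c'. cbn [cpc]. apply upd_neq; auto.
      * intros sv Hsv ES. unfold c' in ES. cbn [cS] in ES. split; auto. split; auto. split; auto.
        intros q' ta o'' i' _ Hn Hh Hw. unfold c'. cbn [cpc cH].
        destruct (Nat.eq_dec q' q) as [->|Hne].
        -- rewrite Hq in Hh. inversion Hh; subst ta. contradiction.
        -- rewrite upd_neq by auto. split; auto. destruct (Nat.eq_dec q' p) as [->|Hq'].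
           ++ rewrite upd_eq. rewrite E in Hw. exact Hw.
           ++ rewrite upd_neq; auto.
Qed.

Lemma inv_line6_fail h c tix last_inv G p o t ts ss rs q : U_inv h c tix last_inv G ->
    cpc c p = At6 o t (ts, ss, rs, q) ->
  deref (cH c) q <> (ts, RNull) -> U_inv h (set_pc c p (At7 o t (ts, ss, rs, q))) tix last_inv G.
Proof.
  intros HI E Hd. proc_inv_of HI p E HP.
  local_step E. destruct HP as [HP1 HP2]. split; [exact HP1|]. split; auto.
Qed.

Lemma inv_line7_succ h c tix last_inv G p o t sv : U_inv h c tix last_inv G ->
    cpc c p = At7 o t sv ->
  U_inv h (Config (cC c) (t, Some o, Some p) (cS c) (cH c) (upd (cpc c) p (At8 o t sv))) tix last_inv G.
Proof.
  intros HI E. proc_inv_of HI p E HP.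
  apply inv_local_A; auto; rewrite ?E; try discriminate; try reflexivity; [| |simpl; auto|simpl; auto].
  - destruct HP as [[_ [W2 _]] _]. right. exists t, o, p, (last_inv p). auto.
  - proc_inv_self. exact HP.
Qed.

Lemma inv_line7_fail h c tix last_inv G p o t sv : U_inv h c tix last_inv G ->
    cpc c p = At7 o t sv ->
  U_inv h (set_pc c p (At8 o t sv)) tix last_inv G.
Proof.
  intros HI E. proc_inv_of HI p E HP.
  local_step E. exact HP.
Qed.

Lemma inv_line8 h c tix last_inv G p o t sv : U_inv h c tix last_inv G -> cpc c p = At8 o t sv ->
  U_inv h (set_pc c p (At9 o t sv (cA c))) tix last_inv G.
Proof.
  intros HI E. proc_inv_of HI p E HP.
  local_step E. destruct HP as [HP1 [HP2 HP3]]. split; [exact HP1|]. split; auto. split; auto.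
  apply (inv_A _ _ _ _ _ HI).
Qed.

Lemma inv_line9_apply h c tix last_inv G p o t ts ss rs qs ta oa qa s' r' :
  U_inv h c tix last_inv G ->
  cpc c p = At9 o t (ts, ss, rs, qs) (ta, Some oa, qa) ->
  deref (cH c) qa = (ta, RNull) -> delta ss oa s' r' ->
  U_inv h (set_pc c p (At12 o t (ts, ss, rs, qs) (ta, Some oa, qa) s' r')) tix last_inv G.
Proof.
  intros HI E Hd Hdel. proc_inv_of HI p E HP.
  local_step E. destruct HP as [HP1 [HP2 [HP3 HP4]]]. split; [exact HP1|]. split; auto.
  intros ES. split; auto.
  destruct HP4 as [HA|[ta' [oa' [q [i [HA1 HA2]]]]]]; [discriminate|].
  inversion HA1; subst ta' oa' qa.
  simpl in Hd. pose proof (HP3 ES) as Hn. rewrite <- ES in Hn.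
  destruct (inv_null_unlogged _ _ _ _ _ _ _ HI Hn Hd) as [K1 [K2 _]].
  exists ta, oa, q, i. split; auto. split; auto. split; auto. split; [|split; auto].
  - rewrite <- (inv_S_state _ _ _ _ _ HI). rewrite ES. exact Hdel.
  - destruct (Nat.eq_dec q p) as [->|Hq].
    + rewrite upd_eq. rewrite E in K2. exact K2.
    + rewrite upd_neq; auto.
Qed.

Lemma inv_line9_else h c tix last_inv G p o t sv ta oa qa : U_inv h c tix last_inv G ->
    cpc c p = At9 o t sv (ta, oa, qa) ->
  U_inv h (set_pc c p (At13 o t sv (ta, oa, qa))) tix last_inv G.
Proof.
  intros HI E. proc_inv_of HI p E HP.
  local_step E. apply HP.
Qed.

Lemma inv_line12_succ h c tix last_inv G p o t sv ta oa qa s' r' : U_inv h c tix last_inv G ->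
  cpc c p = At12 o t sv (ta, oa, qa) s' r' -> cS c = sv ->
  U_inv h (Config (cC c) (cA c) (ta, s', RVal r', qa) (cH c) (upd (cpc c) p (At4 o t))) tix last_inv
      (G ++ [(ta, length h, s', r')]).
Proof.
  intros HI E ES. proc_inv_of HI p E HP.
  destruct HP as [HP1 [HP2 HP3]].
  destruct (HP3 ES) as [Hn [ta0 [oa0 [q [i [K1 [K2 [K3 [K4 [K5 K6]]]]]]]]]].
  inversion K1; subst ta0 oa qa. clear HP3.
  assert (HGs : forall k x, nth_error G k = Some x ->
      nth_error (G ++ [(ta, length h, s', r')]) k = Some x).
  { intros k x Hk. rewrite nth_error_app1; auto. apply nth_error_Some. congruence. }
  destruct (inv_tix_valid _ _ _ _ _ HI _ _ _ _ K2) as [Hta Hi].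
  assert (Hil : i < length h) by (apply nth_error_Some; congruence).
  pose proof HI as HI0. destruct HI; constructor; cbn [cpc cH cS cA cC]; auto.
  - intros t' q' o2 i' Ht Hi'. destruct (Nat.eq_dec q' p) as [->|Hq'].
    + rewrite upd_eq. right.
      destruct (inv_tix_owner0 t' p o2 i' Ht Hi') as [E'|E']; rewrite E in E'; [discriminate|exact E'].
    + rewrite upd_neq by auto. eauto.
  - right. exists (length G), ta, (length h), s', r', q, oa0, i.
    split; [rewrite length_app; simpl; lia|].
    split; [apply nth_error_snoc_last|]. auto.
  - apply (log_ok_snoc h tix G ta q oa0 i); auto.
  - unfold log_ids in *. rewrite map_app. apply NoDup_snoc; auto.
  - apply (time_sorted_snoc h tix); auto.
  - intros q' t' _ Hh k n s r Hk. rewrite length_app. simpl.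
    apply nth_error_snoc_inv in Hk. destruct Hk as [[Hkl Hk]|[Hkl Hk]]; [exfalso|lia].
    rewrite <- ES in Hn. destruct (inv_null_unlogged _ _ _ _ _ _ _ HI0 Hn Hh) as [Hnot _].
    apply Hnot, in_log_ids. eauto.
  - intros i1 j Hr.
    destruct (inv_resp0 i1 j Hr) as [k [t' [n [s [r [q' [o2 [p' [H1 [H2 [H3 H4]]]]]]]]]]].
    exists k, t', n, s, r, q', o2, p'. auto.
  - intros q''. destruct (Nat.eq_dec q'' p) as [->|Hq''].
    + proc_inv_self. eapply looping_ok_log; eauto.
    + apply (proc_inv_frame h h c _ tix tix last_inv last_inv G _ q''); auto.
      * cbn [cpc]. apply upd_neq; auto.
      * left. reflexivity.
      * intros o2 t3 E3 Hn3. rewrite log_ids_snoc. intros Hin. apply in_app_or in Hin.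
        destruct Hin as [Hin|[Hin|[]]]; auto. simpl in Hin. subst t3.
        pose proof (inv_proc0 q'') as HPq. unfold proc_inv in HPq. rewrite E3 in HPq.
        destruct HPq as [_ [_ [HT3 _]]]. destruct (tix_fun _ _ _ _ _ _ _ _ HT3 K2) as [<- _].
        rewrite E3 in K6. exact K6.
      * intros sv' Hsv' ES'. cbn [cS] in ES'. exfalso.
        apply (S_logged_fresh G tix sv' ta s' (RVal r') (Some q) Hsv'); auto. lia.
Qed.

Lemma inv_line12_fail h c tix last_inv G p o t sv av s' r' : U_inv h c tix last_inv G ->
    cpc c p = At12 o t sv av s' r' ->
  U_inv h (set_pc c p (At4 o t)) tix last_inv G.
Proof.
  intros HI E. proc_inv_of HI p E HP.
  local_step E. apply HP.
Qed.

Lemma inv_line13_succ h c tix last_inv G p o t sv av : U_inv h c tix last_inv G ->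
    cpc c p = At13 o t sv av ->
  U_inv h (Config (cC c) (t, Some o, Some p) (cS c) (cH c) (upd (cpc c) p (At4 o t))) tix last_inv G.
Proof.
  intros HI E. proc_inv_of HI p E HP.
  apply inv_local_A; auto; rewrite ?E; try discriminate; try reflexivity; [| |simpl; auto|simpl; auto].
  - destruct HP as [_ [W2 _]]. right. exists t, o, p, (last_inv p). auto.
  - proc_inv_self. exact HP.
Qed.

Lemma inv_line13_fail h c tix last_inv G p o t sv av : U_inv h c tix last_inv G ->
    cpc c p = At13 o t sv av ->
  U_inv h (set_pc c p (At4 o t)) tix last_inv G.
Proof.
  intros HI E. proc_inv_of HI p E HP.
  local_step E. apply HP.
Qed.

Lemma inv_line14 h c tix last_inv G p o t : U_inv h c tix last_inv G -> cpc c p = At14 o t ->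
  U_inv (h ++ [(p, EResp (snd (cH c p)))]) (set_pc c p Idle) tix last_inv G.
Proof.
  intros HI E. proc_inv_of HI p E HP.
  destruct HP as [HP1 [HP2 [r [HP3 HP4]]]]. rewrite HP4. simpl snd.
  set (e := EResp (RVal r)).
  assert (Hnth : forall i x, nth_error h i = Some x -> nth_error (h ++ [(p, e)]) i = Some x).
  { intros i x Hx. rewrite nth_error_app1; auto. apply nth_error_Some. congruence. }
  destruct HI; constructor; unfold set_pc; cbn [cpc cH cS cA cC]; auto.
  - intros t' q o' i Ht. destruct (inv_tix_valid0 t' q o' i Ht). auto.
  - intros t' q o' i Ht Hi. destruct (Nat.eq_dec q p) as [->|Hq].
    + rewrite upd_eq. left. reflexivity.
    + rewrite upd_neq by auto. eauto.
  - apply log_ok_history_snoc. exact inv_log0.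
  - intros q t' Hw Hh. destruct (Nat.eq_dec q p) as [->|Hq].
    + rewrite upd_eq in Hw. destruct Hw.
    + rewrite upd_neq in Hw by auto. eapply inv_null_last0; eauto.
  - intros q. destruct (Nat.eq_dec q p) as [->|Hq].
    + assert (Hlast : proc_events p h = proc_events p (firstn (last_inv p) h) ++ [EInv o])
        by (destruct HP1; apply proc_events_last; auto).
      rewrite proc_events_snoc_self, Hlast, <- app_assoc. apply alternating_snoc_resp.
      rewrite <- Hlast. auto.
    + rewrite proc_events_snoc_other; auto.
  - intros i j Hr. pose proof (resp_of_lt _ _ _ Hr) as Hj. rewrite length_app in Hj. simpl in Hj.
    destruct (Nat.eq_dec j (length h)) as [->|Hj'].
    + pose proof (resp_of_last _ _ _ _ _ _ HP1 Hr) as ->.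
      destruct HP3 as [k [n [s Hk]]]. exists k, t, n, s, r, p, o, p. split; auto. split; auto.
      split; [destruct (inv_log0 k _ _ _ _ Hk); auto|]. apply nth_error_snoc_last.
    + destruct (inv_resp0 i j) as [k [t' [n [s [r' [q [o' [p' [H1 [H2 [H3 H4]]]]]]]]]]].
      * apply (resp_of_snoc _ _ _ _ Hr). lia.
      * exists k, t', n, s, r', q, o', p'. repeat split; auto.
  - intros q. destruct (Nat.eq_dec q p) as [->|Hq].
    + proc_inv_self. rewrite HP4. split; [discriminate|]. intros l o' Hl.
      rewrite proc_events_snoc_self in Hl. apply app_inj_tail in Hl. destruct Hl as [_ Hl].
      discriminate.
    + apply (proc_inv_frame_pc h _ c _ tix tix last_inv last_inv G p Idle q); auto.
      * rewrite E. intros _ [].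
      * intros i o' Hc. apply latest_inv_snoc; auto.
      * apply proc_events_snoc_other; auto.
Qed.

Lemma U_inv_step h c tix last_inv G p l c' : U_inv h c tix last_inv G -> ustep delta c p l c' ->
  exists tix' last_inv' G',
    U_inv (h ++ match l with Some e => [(p, e)] | None => [] end) c' tix' last_inv' G'.
Proof.
  intros HI Hs. destruct Hs; cbn iota; rewrite ?app_nil_r; do 3 eexists;
  solve [ eapply inv_line1; eauto
        | eapply inv_line2; eauto
        | eapply inv_line3; eauto
        | eapply inv_line4_loop; eauto
        | eapply inv_line4_exit; eauto
        | eapply inv_line5; eauto
        | eapply inv_line6_succ; eauto
        | eapply inv_line6_fail; eauto
        | eapply inv_line7_succ; eauto
        | eapply inv_line7_fail; eauto
        | eapply inv_line8; eauto
        | eapply inv_line9_apply; eauto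
        | eapply inv_line9_else; eauto
        | eapply inv_line12_succ; eauto
        | eapply inv_line12_fail; eauto
        | eapply inv_line13_succ; eauto
        | eapply inv_line13_fail; eauto
        | eapply inv_line14; eauto ].
Qed.

Lemma U_inv_reach tr c : reach delta s0 tr c ->
    exists tix last_inv G, U_inv (history tr) c tix last_inv G.
Proof.
  induction 1 as [|tr c p l c' Hr IH Hs].
  - exists (fun _ => None), (fun _ => 0), []. apply U_inv_init.
  - destruct IH as [tix [last_inv [G HI]]]. rewrite history_snoc. eapply U_inv_step; eauto.
Qed.

Lemma state_before_map (f : entry -> entry) G k : (forall g, ent_state (f g) = ent_state g) ->
    state_before (map f G) k = state_before G k.
Proof.
  intros Hf. destruct k; [reflexivity|]. simpl. rewrite nth_error_map.
  destruct (nth_error G k); simpl; auto.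
Qed.

Definition inv_of_ticket tix (t : nat) : nat :=
  match tix t with Some (_, _, i) => i | None => 0 end.

Definition relabel tix (g : entry) : entry :=
  (inv_of_ticket tix (ent_id g), ent_time g, ent_state g, ent_resp g).

Lemma linearizable_of_U_inv h c tix last_inv G : U_inv h c tix last_inv G ->
  exists h', is_completion h h' /\ linearizable_conforming delta s0 h'.
Proof.
  intros HI. apply (linearizable_of_log h (map (relabel tix) G)).
  - intros p. apply (inv_wf _ _ _ _ _ HI).
  - rewrite map_map.
    apply (NoDup_map_comp ent_id (inv_of_ticket tix) G); [apply (inv_log_NoDup _ _ _ _ _ HI)|].
    intros a b Ha Hb Hab.
    destruct a as [[[ta na] sa] ra]. destruct b as [[[tb nb] sb] rb].
    destruct (In_nth_error _ _ Ha) as [ka Hka]. destruct (In_nth_error _ _ Hb) as [kb Hkb].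
    destruct (inv_log _ _ _ _ _ HI ka _ _ _ _ Hka) as [[qa [oa [ia [Hta _]]]] _].
    destruct (inv_log _ _ _ _ _ HI kb _ _ _ _ Hkb) as [[qb [ob [ib [Htb _]]]] _].
    unfold inv_of_ticket, ent_id in Hab. simpl in Hab. rewrite Hta, Htb in Hab. subst ib.
    unfold ent_id. simpl. eapply (inv_tix_inj _ _ _ _ _ HI); eauto.
  - intros k g Hk. rewrite nth_error_map in Hk.
    destruct (nth_error G k) as [[[[t n] s] r]|] eqn:Hg; [|discriminate].
    simpl in Hk. inversion Hk; subst g. clear Hk.
    destruct (inv_log _ _ _ _ _ HI k _ _ _ _ Hg) as [[q [o [i [Ht [Hin Hd]]]]] Hn].
    pose proof (inv_tix_valid _ _ _ _ _ HI _ _ _ _ Ht) as [_ Hi].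
    unfold relabel, inv_of_ticket, ent_id, ent_time, ent_state, ent_resp. simpl. rewrite Ht.
    split; [|split; auto].
    exists q, o. split; auto. rewrite state_before_map; auto.
  - intros k g g' Hg Hg'. rewrite nth_error_map in Hg, Hg'.
    destruct (nth_error G k) eqn:E1; [|discriminate].
    destruct (nth_error G (S k)) eqn:E2; [|discriminate].
    simpl in Hg, Hg'. inversion Hg; inversion Hg'; subst. unfold relabel, ent_time. simpl.
    apply (inv_log_sorted _ _ _ _ _ HI k _ _ E1 E2).
  - intros i j Hij.
    destruct (inv_resp _ _ _ _ _ HI i j Hij) as [k [t [n [s [r [q [o [p [Hk [Ht [Hn Hj]]]]]]]]]]].
    exists k, (relabel tix (t, n, s, r)), p. rewrite nth_error_map, Hk. split; auto.
    unfold relabel, inv_of_ticket, ent_id, ent_time, ent_resp. simpl. rewrite Ht. auto.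
Qed.

End Log.

Theorem mainTheorem2 (OP RES St : Type) (delta : St -> OP -> St -> RES -> Prop) (s0 : St)
  (tr : list (proc * option (ev OP RES))) (c : config OP RES St) :
  reach delta s0 tr c ->
  exists h', is_completion (history tr) h' /\ linearizable_conforming delta s0 h'.
Proof.
  intros Hreach. destruct (U_inv_reach OP RES St delta s0 tr c Hreach) as (tix & last_inv & G & HI).
  exact (linearizable_of_U_inv OP RES St delta s0 _ _ _ _ _ HI).
Qed.
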